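(* Each non-empty stunted sawtooth bone $B^{\rm saw}_\pm(o)$ of period $p\ge2$ is a simple arc with both endpoints on a common edge of the triangle $\overline T$, and it is made up of three line segments which are alternately horizontal and vertical (in the coordinates $(w_1,w_2)$). Any pair $B^{\rm saw}_-(o)$ and $B^{\rm saw}_+(o')$ of such bones intersect transversally in either $0$, $2$, or $4$ points. Dual bones $B^{\rm saw}_-(o)$ and $B^{\rm saw}_+(o)$ (same order type) always intersect in exactly two points.
   Context: $\overline T=\{(w_1,w_2)\in\mathbb R^2: 1\ge w_1\ge w_2\ge0\}$, whose edges are $\{w_1=1\}$, $\{w_2=0\}$, $\{w_1=w_2\}$. For $\mathbf w\in\overline T$, the stunted sawtooth map $S_{\mathbf w}:[0,1]\to[0,1]$ is $S_{\mathbf w}(x)=\min(3x,w_1)$ on $[0,1/3]$, $\min(w_1,\max(w_2,2-3x))$ on $[1/3,2/3]$, $\max(3x-2,w_2)$ on $[2/3,1]$. A periodic orbit $x_1<\dots<x_p$ of $g$ has order type $o$ (cyclic permutation of $\{1,\dots,p\}$) if $g(x_i)=x_{o(i)}$. $B^{\rm saw}_-(o)$ (resp. $B^{\rm saw}_+(o)$) is the set of $\mathbf w\in\overline T$ such that $1/3$ (resp. $2/3$) is periodic under $S_{\mathbf w}$ with orbit of order type $o$. *)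

From Stdlib Require Import Reals Lra Lia List.
Open Scope R_scope.

Definition inT (w : R * R) : Prop :=
  1 >= fst w /\ fst w >= snd w /\ snd w >= 0.

Definition saw (w1 w2 : R) (x : R) : R :=
  if Rle_dec x (1/3) then Rmin (3 * x) w1
  else if Rle_dec x (2/3) then Rmin w1 (Rmax w2 (2 - 3 * x))
  else Rmax (3 * x - 2) w2.

(* o (0-based: indices 0..p-1) is a cyclic permutation of {0,...,p-1}. *)
Definition is_cyclic_perm (p : nat) (o : nat -> nat) : Prop :=
  (forall i, (i < p)%nat -> (o i < p)%nat) /\
  (forall i j, (i < p)%nat -> (j < p)%nat -> o i = o j -> i = j) /\
  (forall i, (i < p)%nat -> exists k, Nat.iter k o 0%nat = i).

Definition periodic_order_type (g : R -> R) (c : R) (p : nat) (o : nat -> nat) : Prop :=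
  exists x : nat -> R,
    (forall i j, (i < j)%nat -> (j < p)%nat -> x i < x j) /\
    (forall k, exists i, (i < p)%nat /\ Nat.iter k g c = x i) /\
    (forall i, (i < p)%nat -> exists k, Nat.iter k g c = x i) /\
    (forall i, (i < p)%nat -> g (x i) = x (o i)).

Inductive sign := Minus | Plus.

Definition crit (s : sign) : R := match s with Minus => 1/3 | Plus => 2/3 end.

Definition bone (s : sign) (p : nat) (o : nat -> nat) (w : R * R) : Prop :=
  inT w /\ periodic_order_type (saw (fst w) (snd w)) (crit s) p o.

Definition seg (P Q z : R * R) : Prop :=
  exists t, 0 <= t <= 1 /\
    z = (fst P + t * (fst Q - fst P), snd P + t * (snd Q - snd P)).

Definition open_seg (P Q z : R * R) : Prop :=
  exists t, 0 < t < 1 /\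
    z = (fst P + t * (fst Q - fst P), snd P + t * (snd Q - snd P)).

Definition horiz (P Q : R * R) : Prop := snd P = snd Q.
Definition vert (P Q : R * R) : Prop := fst P = fst Q.

Definition hv_path (P : nat -> R * R) : Prop :=
  (forall i, (i < 3)%nat -> P i <> P (S i)) /\
  ((horiz (P 0%nat) (P 1%nat) /\ vert (P 1%nat) (P 2%nat) /\ horiz (P 2%nat) (P 3%nat)) \/
   (vert (P 0%nat) (P 1%nat) /\ horiz (P 1%nat) (P 2%nat) /\ vert (P 2%nat) (P 3%nat))).

Definition on_path (P : nat -> R * R) (z : R * R) : Prop :=
  exists i, (i < 3)%nat /\ seg (P i) (P (S i)) z.

Inductive edge := E_w1_eq_1 | E_w2_eq_0 | E_diag.

Definition on_edge (e : edge) (z : R * R) : Prop :=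
  match e with
  | E_w1_eq_1 => fst z = 1 /\ 0 <= snd z <= 1
  | E_w2_eq_0 => snd z = 0 /\ 0 <= fst z <= 1
  | E_diag => fst z = snd z /\ 0 <= fst z <= 1
  end.

Definition simple_arc (B : R * R -> Prop) (a b : R * R) : Prop :=
  exists g1 g2 : R -> R,
    (forall t, 0 <= t <= 1 -> continuity_pt g1 t /\ continuity_pt g2 t) /\
    (forall s t, 0 <= s <= 1 -> 0 <= t <= 1 ->
        (g1 s, g2 s) = (g1 t, g2 t) -> s = t) /\
    (forall z, B z <-> exists t, 0 <= t <= 1 /\ z = (g1 t, g2 t)) /\
    (g1 0, g2 0) = a /\ (g1 1, g2 1) = b.

Definition transversal_crossing (P Q : nat -> R * R) (q : R * R) : Prop :=
  exists i j, (i < 3)%nat /\ (j < 3)%nat /\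
    open_seg (P i) (P (S i)) q /\ open_seg (Q j) (Q (S j)) q /\
    (horiz (P i) (P (S i)) <-> vert (Q j) (Q (S j))).

Definition bone_shape (B : R * R -> Prop) (P : nat -> R * R) : Prop :=
  hv_path P /\ (forall z, B z <-> on_path P z).

Definition meet_transversally_in (B1 B2 : R * R -> Prop) (P Q : nat -> R * R)
    (n : nat) : Prop :=
  exists l : list (R * R), NoDup l /\ length l = n /\
    (forall q, In q l <-> (B1 q /\ B2 q)) /\
    (forall q, In q l -> transversal_crossing P Q q).

(* On a minus bone the orbit of [1/3] has an itinerary dictated by the order type [o]:
   points left of [1/3] follow the first lap, and of the points right of [1/3] the one
   with the lowest image, [x_mu], separates those on the second lap from those on the
   third; only [x_mu] can be clipped, by the plateau [w2]. Running the itinerary back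
   from [S^p(1/3) = 1/3] fixes the value [b] just after [x_mu]. Either [x_mu] lies on the
   plateau, so [w2 = b] and [w1] ranges over an interval [[a1, a2]] on which the orbit
   points, affine in [w1], never collide; or [x_mu] is an end of the plateau, so
   [w1 = a1] or [w1 = a2] and [0 <= w2 <= b]. The bone is thus a U, and a plus bone is
   the image of a minus bone under [(w1, w2) |-> (1 - w2, 1 - w1)].
   The numbers [a1], [a2], [b] are [N / 3^n] with [N] odd, while [1 - x] has an even
   numerator, so corners of a minus and of a plus bone never line up and the two U
   shapes cross transversally in 0, 2 or 4 points. For dual bones, the point of the
   horizontal edge of the minus bone whose orbit passes through [2/3] lies on both
   bones, which leaves exactly two crossings. *)

From Stdlib Require Import Reals Lra Lia List Classical ZArith Wf_nat.
From Stdlib Require FinFun.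
Open Scope R_scope.

Ltac saw_cases := unfold inT, saw, Rmin, Rmax in *; simpl in *;
  repeat match goal with
  | |- context [Rle_dec ?a ?b] => destruct (Rle_dec a b)
  | H : context [Rle_dec ?a ?b] |- _ => destruct (Rle_dec a b)
  end; lra.

(** * Laps of the sawtooth *)

Inductive lap := Lap1 | Lap2 | Lap3.

Definition lap_map (e : lap) (x : R) : R :=
  match e with Lap1 => 3 * x | Lap2 => 2 - 3 * x | Lap3 => 3 * x - 2 end.

Definition on_lap (e : lap) (x : R) : Prop :=
  match e with
  | Lap1 => 0 <= x <= 1/3
  | Lap2 => 1/3 <= x <= 2/3
  | Lap3 => 2/3 <= x <= 1
  end.

(* [lap_map e v] is not cut off by the plateaus [w1] and [w2] of [saw w1 w2]. *)
Definition unclipped (w1 w2 : R) (e : lap) (v : R) : Prop :=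
  match e with Lap1 => v <= w1 | Lap2 => w2 <= v <= w1 | Lap3 => w2 <= v end.

Lemma unclipped_of_bounds w1 w2 e v :
  (e <> Lap3 -> v <= w1) -> (e <> Lap1 -> w2 <= v) -> unclipped w1 w2 e v.
Proof. destruct e; simpl; intros H1 H2; repeat split; (apply H1 || apply H2); discriminate. Qed.

Lemma lap_map_inj e x y : lap_map e x = lap_map e y -> x = y.
Proof. destruct e; simpl; lra. Qed.

Lemma on_lap_of_image e x : 0 <= lap_map e x <= 1 -> on_lap e x.
Proof. destruct e; simpl; lra. Qed.

Lemma on_lap_01 e x : on_lap e x -> 0 <= x <= 1.
Proof. destruct e; simpl; lra. Qed.

Lemma lap_map_agree e e' x : on_lap e x -> on_lap e' x -> lap_map e x = lap_map e' x.
Proof. destruct e, e'; simpl; lra. Qed.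

Lemma lap_map_to_one e x : on_lap e x -> x = 1/3 \/ x = 1 -> lap_map e x = 1.
Proof. destruct e; simpl; lra. Qed.

Lemma lap_map_plateau_edge e b x :
  0 < b < 1 -> x = (2 - b)/3 \/ x = (2 + b)/3 -> on_lap e x -> lap_map e x = b.
Proof. destruct e; simpl; lra. Qed.

(* The end of the plateau [(2 - b)/3 <= x <= (2 + b)/3] lying on lap [e]
   ([e = Lap1] is meaningless and never used). *)
Definition plateau_end (e : lap) (b : R) : R :=
  match e with Lap2 => (2 - b)/3 | _ => (2 + b)/3 end.

Lemma plateau_end_bounds e b : 0 <= b -> (2 - b)/3 <= plateau_end e b <= (2 + b)/3.
Proof. destruct e; simpl; lra. Qed.

Lemma plateau_end_lap_map e z : e <> Lap1 -> plateau_end e (lap_map e z) = z.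
Proof. destruct e; simpl; intros; [easy | field | field]. Qed.

Lemma lap_map_plateau_end e b : e <> Lap1 -> lap_map e (plateau_end e b) = b.
Proof. destruct e; simpl; intros; [easy | field | field]. Qed.

Lemma lap_map_affine e a d :
  d <> 0 -> exists a' d', d' <> 0 /\ forall t, lap_map e (a + d * t) = a' + d' * t.
Proof.
  intros Hd; destruct e; simpl.
  - exists (3 * a), (3 * d); split; [lra | intro; ring].
  - exists (2 - 3 * a), (-3 * d); split; [lra | intro; ring].
  - exists (3 * a - 2), (3 * d); split; [lra | intro; ring].
Qed.

Section SawOnT.
Variables w1 w2 : R.
Hypothesis w_in_T : inT (w1, w2).

Lemma saw_third : saw w1 w2 (1/3) = w1.
Proof. saw_cases. Qed.

Lemma saw_01 y : 0 <= y <= 1 -> 0 <= saw w1 w2 y <= 1.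
Proof. intros; saw_cases. Qed.

Lemma saw_ge_w2 y : 1/3 <= y -> w2 <= saw w1 w2 y.
Proof. intros; saw_cases. Qed.

Lemma saw_le_w1 y : y <= 2/3 -> saw w1 w2 y <= w1.
Proof. intros; saw_cases. Qed.

Lemma saw_incr1 u v : u <= v <= 1/3 -> saw w1 w2 u <= saw w1 w2 v.
Proof. intros; saw_cases. Qed.

Lemma saw_decr2 u v : 1/3 <= u <= v -> v <= 2/3 -> saw w1 w2 v <= saw w1 w2 u.
Proof. intros; saw_cases. Qed.

Lemma saw_incr3 u v : 2/3 <= u <= v -> saw w1 w2 u <= saw w1 w2 v.
Proof. intros; saw_cases. Qed.

Lemma saw_plateau y : (2 - w2)/3 <= y <= (2 + w2)/3 -> saw w1 w2 y = w2.
Proof. intros; saw_cases. Qed.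

Lemma saw_lap e y : on_lap e y -> unclipped w1 w2 e (lap_map e y) -> saw w1 w2 y = lap_map e y.
Proof. destruct e; simpl; intros; saw_cases. Qed.

Lemma saw_plateau_end e b : e <> Lap1 -> w2 <= b <= w1 -> saw w1 w2 (plateau_end e b) = b.
Proof. destruct e; simpl; intros; [easy | saw_cases..]. Qed.

End SawOnT.

Lemma saw_symmetric w1 w2 y :
  0 <= w2 -> w2 <= w1 -> w1 <= 1 -> saw (1 - w2) (1 - w1) (1 - y) = 1 - saw w1 w2 y.
Proof. intros; saw_cases. Qed.

Definition between (x y s : R) : Prop := x <= s <= y \/ y <= s <= x.

Definition strictly_between (x y s : R) : Prop := x < s < y \/ y < s < x.

Lemma param_between y1 y2 u : y1 <> y2 ->
  (exists t, 0 <= t <= 1 /\ u = y1 + t * (y2 - y1)) <-> between y1 y2 u.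
Proof.
  intros Hne; unfold between; split.
  - intros [t [Ht ->]]; destruct (Rle_dec y1 y2); [left | right]; split; nra.
  - intros Hu; exists ((u - y1) / (y2 - y1)).
    assert (Et : (u - y1) / (y2 - y1) * (y2 - y1) = u - y1) by (field; lra).
    split; [| lra]; destruct (Rlt_dec y1 y2); split; nra.
Qed.

Lemma param_strictly_between y1 y2 u : strictly_between y1 y2 u ->
  exists t, 0 < t < 1 /\ u = y1 + t * (y2 - y1).
Proof.
  intros Hu; exists ((u - y1) / (y2 - y1)).
  assert (Et : (u - y1) / (y2 - y1) * (y2 - y1) = u - y1) by (field; destruct Hu; lra).
  split; [| lra]; destruct Hu; split; nra.
Qed.

Definition affine (f : R -> R) := exists a d, forall t, f t = a + d * t.

Lemma affine_sub f g : affine f -> affine g -> affine (fun t => f t - g t).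
Proof. intros [a [d Hf]] [a' [d' Hg]]; exists (a - a'), (d - d'); intro t; rewrite Hf, Hg; ring. Qed.

Lemma affine_interp f t0 s l : affine f -> f (t0 + l * (s - t0)) = f t0 + l * (f s - f t0).
Proof. intros [a [d H]]; rewrite !H; ring. Qed.

Lemma affine_ivt f t0 s L : affine f -> (f t0 < L <= f s \/ f s <= L < f t0) ->
  exists l, 0 <= l <= 1 /\ f (t0 + l * (s - t0)) = L.
Proof.
  intros Hf HL.
  destruct (proj2 (param_between (f t0) (f s) L ltac:(intro; lra)) ltac:(unfold between; lra))
    as [l [Hl E]].
  exists l; split; [exact Hl | rewrite affine_interp by exact Hf; lra].
Qed.

(** * Triadic parity *)

(* The corners of every bone are odd triadic, while [1 - x] is even triadic for odd
   triadic [x]: this is what keeps corners of different bones apart. *)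
Definition odd_triadic (x : R) := exists (n : nat) (N : Z), Z.odd N = true /\ x * 3 ^ n = IZR N.
Definition even_triadic (x : R) := exists (n : nat) (N : Z), Z.even N = true /\ x * 3 ^ n = IZR N.

Lemma pow3_IZR n : 3 ^ n = IZR (3 ^ Z.of_nat n).
Proof. rewrite <- pow_IZR; reflexivity. Qed.

Lemma odd_pow3 n : Z.odd (3 ^ Z.of_nat n) = true.
Proof.
  induction n as [|n IH]; [reflexivity |].
  rewrite Nat2Z.inj_succ, Z.pow_succ_r by lia; rewrite Z.odd_mul, IH; reflexivity.
Qed.

Lemma odd_triadic_third : odd_triadic (1/3).
Proof. exists 1%nat, 1%Z; split; [reflexivity | simpl; field]. Qed.

Lemma odd_triadic_lap_preimage e y : odd_triadic (lap_map e y) -> odd_triadic y.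
Proof.
  intros [n [N [HN E]]]; exists (S n).
  assert (H3 : 3 ^ S n = 3 * 3 ^ n) by reflexivity.
  destruct e; simpl in E.
  - exists N; split; [exact HN | rewrite H3, <- E; ring].
  - exists (2 * 3 ^ Z.of_nat n - N)%Z; split.
    + rewrite Z.odd_sub, Z.odd_mul, HN; reflexivity.
    + rewrite minus_IZR, mult_IZR, <- pow3_IZR, H3, <- E; ring.
  - exists (N + 2 * 3 ^ Z.of_nat n)%Z; split.
    + rewrite Z.odd_add, Z.odd_mul, HN; reflexivity.
    + rewrite plus_IZR, mult_IZR, <- pow3_IZR, H3, <- E; ring.
Qed.

Lemma even_triadic_one_minus x : odd_triadic x -> even_triadic (1 - x).
Proof.
  intros [n [N [HN E]]]; exists n, (3 ^ Z.of_nat n - N)%Z; split.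
  - rewrite Z.even_sub, <- !Z.negb_odd, odd_pow3, HN; reflexivity.
  - rewrite minus_IZR, <- pow3_IZR, <- E; ring.
Qed.

Lemma odd_even_triadic_neq x y : odd_triadic x -> even_triadic y -> x <> y.
Proof.
  intros [n [N [HN E]]] [m [M [HM F]]] <-.
  assert (HZ : (N * 3 ^ Z.of_nat m = M * 3 ^ Z.of_nat n)%Z).
  { apply eq_IZR; rewrite !mult_IZR, <- !pow3_IZR, <- E, <- F; ring. }
  apply (f_equal Z.odd) in HZ.
  rewrite !Z.odd_mul, HN, !odd_pow3, <- Z.negb_even, HM in HZ; discriminate.
Qed.

Lemma odd_triadic_neq_one_minus x y : odd_triadic x -> odd_triadic y -> x <> 1 - y.
Proof. intros Hx Hy; apply odd_even_triadic_neq, even_triadic_one_minus; assumption. Qed.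

(** * Itineraries *)

Lemma backward_ind (P : nat -> Prop) m n :
  P n -> (forall k, (m <= k < n)%nat -> P (S k) -> P k) -> forall k, (m <= k <= n)%nat -> P k.
Proof.
  intros Hn Hstep.
  assert (H : forall j, (j <= n - m)%nat -> P (n - j)%nat).
  { induction j as [|j IH]; intros Hj; [now rewrite Nat.sub_0_r |].
    apply Hstep; [lia |]. replace (S (n - S j)) with (n - j)%nat by lia. apply IH; lia. }
  intros k Hk; replace k with (n - (n - k))%nat by lia; apply H; lia.
Qed.

Definition follows (c : nat -> lap) (u : nat -> R) (m n : nat) : Prop :=
  forall k, (m <= k < n)%nat -> u (S k) = lap_map (c k) (u k).

Lemma follows_unique c u v m n : follows c u m n -> follows c v m n -> u n = v n ->
  forall k, (m <= k <= n)%nat -> u k = v k.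
Proof.
  intros Hu Hv Hn; apply backward_ind; [exact Hn |].
  intros k Hk E; apply (lap_map_inj (c k)); rewrite <- Hu, <- Hv by exact Hk; exact E.
Qed.

Lemma follows_odd_triadic c u m n : follows c u m n -> odd_triadic (u n) ->
  forall k, (m <= k <= n)%nat -> odd_triadic (u k).
Proof.
  intros Hu Hn; apply backward_ind; [exact Hn |].
  intros k Hk Hodd; apply (odd_triadic_lap_preimage (c k)); rewrite <- Hu by exact Hk; exact Hodd.
Qed.

Lemma NoDup_map_seq (f : nat -> nat) n :
  (forall k l, (k < n)%nat -> (l < n)%nat -> f k = f l -> k = l) -> NoDup (map f (seq 0 n)).
Proof.
  intros Hf; apply FinFun.Injective_map_NoDup_in; [| apply seq_NoDup].
  intros k l Hk Hl; apply in_seq in Hk, Hl; apply Hf; lia.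
Qed.

Lemma iter_mod {A : Type} (f : A -> A) (x : A) d m :
  Nat.iter d f x = x -> Nat.iter m f x = Nat.iter (m mod d) f x.
Proof.
  intros Hd.
  transitivity (Nat.iter (m mod d + m / d * d) f x).
  { f_equal; pose proof (Nat.div_mod_eq m d); lia. }
  rewrite Nat.iter_add; f_equal.
  induction (m / d)%nat as [|q IH]; [reflexivity |].
  rewrite Nat.mul_succ_l, Nat.add_comm, Nat.iter_add, IH; exact Hd.
Qed.

Lemma nat_argmin (f : nat -> nat) lo hi : (lo < hi)%nat ->
  exists m, (lo <= m < hi)%nat /\ forall i, (lo <= i < hi)%nat -> (f m <= f i)%nat.
Proof.
  intros H.
  set (val n := exists i, (lo <= i < hi)%nat /\ f i = n).
  assert (Hval : exists n, val n) by (exists (f lo), lo; split; [lia | reflexivity]).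
  destruct (dec_inh_nat_subset_has_unique_least_element val (fun n => classic _) Hval)
    as [n [[[m [Hm <-]] Hleast] _]].
  exists m; split; [exact Hm |]; intros i Hi; apply Hleast; exists i; split; [exact Hi | reflexivity].
Qed.

Lemma increasing_self_map_id p (f : nat -> nat) : (forall i, (i < p)%nat -> (f i < p)%nat) ->
  (forall i, (S i < p)%nat -> (f i < f (S i))%nat) -> forall i, (i < p)%nat -> f i = i.
Proof.
  intros Hr Hinc.
  assert (Hge : forall i, (i < p)%nat -> (i <= f i)%nat).
  { induction i as [|i IH]; intros Hi; [lia |]; specialize (IH ltac:(lia)); specialize (Hinc i Hi); lia. }
  assert (Hle : forall j i, (i + j = p - 1)%nat -> (i < p)%nat -> (f i + j <= p - 1)%nat).
  { induction j as [|j IH]; intros i E Hi.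
    - specialize (Hr i Hi); lia.
    - specialize (IH (S i) ltac:(lia) ltac:(lia)); specialize (Hinc i ltac:(lia)); lia. }
  intros i Hi; specialize (Hge i Hi); specialize (Hle (p - 1 - i)%nat i ltac:(lia) Hi); lia.
Qed.

Section CyclicIterates.
Variables (p : nat) (o : nat -> nat).
Hypothesis o_range : forall i, (i < p)%nat -> (o i < p)%nat.
Hypothesis o_inj : forall i j, (i < p)%nat -> (j < p)%nat -> o i = o j -> i = j.

Lemma o_surj i : (i < p)%nat -> exists j, (j < p)%nat /\ o j = i.
Proof.
  intros Hip.
  assert (Hincl : incl (map o (seq 0 p)) (seq 0 p)).
  { intros x Hx; apply in_map_iff in Hx; destruct Hx as [j [<- Hj]]; apply in_seq in Hj.
    apply in_seq; specialize (o_range j); lia. }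
  assert (Hsub := NoDup_length_incl (l' := seq 0 p) (NoDup_map_seq o p o_inj)
                    ltac:(rewrite length_map; lia) Hincl).
  destruct (in_map_iff o (seq 0 p) i) as [Hin _].
  destruct (Hin (Hsub i ltac:(apply in_seq; lia))) as [j [Hj Hj']]; apply in_seq in Hj'.
  exists j; split; [lia | exact Hj].
Qed.

Variable a : nat.
Hypothesis a_lt : (a < p)%nat.
Hypothesis a_reaches : forall i, (i < p)%nat -> exists k, Nat.iter k o a = i.

Lemma iter_o_lt k : (Nat.iter k o a < p)%nat.
Proof. induction k; simpl; auto. Qed.

Lemma iter_o_cancel k d : Nat.iter (k + d) o a = Nat.iter k o a -> Nat.iter d o a = a.
Proof.
  induction k as [|k IH]; [easy |].
  intros E; apply IH; apply o_inj; [apply iter_o_lt | apply iter_o_lt | exact E].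
Qed.

Lemma iter_o_return_ge d : (0 < d)%nat -> Nat.iter d o a = a -> (p <= d)%nat.
Proof.
  intros Hd0 Hd.
  replace (p <= d)%nat with
    (length (seq 0 p) <= length (map (fun k => Nat.iter k o a) (seq 0 d)))%nat
    by now rewrite length_map, !length_seq.
  apply NoDup_incl_length; [apply seq_NoDup |].
  intros i Hi; apply in_seq in Hi; destruct (a_reaches i ltac:(lia)) as [k Hk].
  apply in_map_iff; exists (k mod d)%nat; split.
  - rewrite <- (iter_mod o a d k Hd); exact Hk.
  - apply in_seq; split; [lia | apply Nat.mod_upper_bound; lia].
Qed.

Lemma iter_o_inj_before_return d :
  (forall e, (0 < e < d)%nat -> Nat.iter e o a <> a) ->
  forall k l, (k < d)%nat -> (l < d)%nat -> Nat.iter k o a = Nat.iter l o a -> k = l.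
Proof.
  intros Hnoret.
  assert (H : forall k l, (k < l < d)%nat -> Nat.iter k o a <> Nat.iter l o a).
  { intros k l Hkl E; apply (Hnoret (l - k)%nat); [lia |]; apply (iter_o_cancel k).
    replace (k + (l - k))%nat with l by lia; symmetry; exact E. }
  intros k l Hk Hl E; destruct (Nat.lt_total k l) as [L | [L | L]]; [| exact L |].
  - now destruct (H k l ltac:(lia)).
  - now destruct (H l k ltac:(lia)).
Qed.

(* The least return time [d] is [p]: the first [d] iterates are distinct points of
   [0, p), and every iterate is one of them. *)
Lemma iter_o_period :
  Nat.iter p o a = a /\
  forall k l, (k < p)%nat -> (l < p)%nat -> Nat.iter k o a = Nat.iter l o a -> k = l.
Proof.
  set (ret d := (0 < d)%nat /\ Nat.iter d o a = a).
  assert (Hret : exists d, ret d).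
  { destruct (o_surj a a_lt) as [j [Hj Hoj]]; destruct (a_reaches j Hj) as [m Hm].
    exists (S m); split; [lia | simpl; rewrite Hm; exact Hoj]. }
  destruct (dec_inh_nat_subset_has_unique_least_element ret (fun d => classic _) Hret)
    as [d [[[Hd0 Hd] Hleast] _]].
  assert (Hdist : forall k l, (k < d)%nat -> (l < d)%nat -> Nat.iter k o a = Nat.iter l o a -> k = l).
  { apply iter_o_inj_before_return; intros e He Hre.
    specialize (Hleast e (conj (proj1 He) Hre)); lia. }
  assert (Hd_le : (d <= p)%nat).
  { replace (d <= p)%nat with
      (length (map (fun k => Nat.iter k o a) (seq 0 d)) <= length (seq 0 p))%nat
      by now rewrite length_map, !length_seq.
    apply NoDup_incl_length; [apply NoDup_map_seq, Hdist |].
    intros i Hi; apply in_map_iff in Hi; destruct Hi as [k [<- _]].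
    apply in_seq; split; [lia | apply iter_o_lt]. }
  replace p with d by (pose proof (iter_o_return_ge d Hd0 Hd); lia).
  split; [exact Hd | exact Hdist].
Qed.

Fixpoint find_below (f : nat -> nat) (i n : nat) : nat :=
  match n with O => O | S n' => if Nat.eqb (f n') i then n' else find_below f i n' end.

Lemma find_below_spec f i n :
  (exists k, (k < n)%nat /\ f k = i) -> (find_below f i n < n)%nat /\ f (find_below f i n) = i.
Proof.
  induction n as [|n IH]; intros [k [Hk Hf]]; [lia |]; simpl.
  destruct (Nat.eqb_spec (f n) i) as [E | E]; [split; [lia | exact E] |].
  destruct (Nat.eq_dec k n) as [-> | Hkn]; [contradiction |].
  destruct IH as [IH1 IH2]; [exists k; split; [lia | exact Hf] | split; [lia | exact IH2]].
Qed.

Lemma iter_o_inverse :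
  exists tau : nat -> nat, forall i, (i < p)%nat -> (tau i < p)%nat /\ Nat.iter (tau i) o a = i.
Proof.
  exists (fun i => find_below (fun k => Nat.iter k o a) i p); intros i Hi.
  apply find_below_spec; destruct (a_reaches i Hi) as [k Hk].
  exists (k mod p)%nat; split; [apply Nat.mod_upper_bound; lia |].
  rewrite <- (iter_mod o a p k (proj1 iter_o_period)); exact Hk.
Qed.

End CyclicIterates.

(** * The critical orbit on a bone *)

Lemma periodic_order_type_shift g c d p o k : (1 <= p)%nat -> periodic_order_type g c p o ->
  Nat.iter k g c = d -> Nat.iter p g c = c -> periodic_order_type g d p o.
Proof.
  intros Hp [x (Hinc & Hall & Hreach & Hstep)] Hk Hper.
  exists x; split; [exact Hinc |]; split; [| split; [| exact Hstep]].
  - intros m; destruct (Hall (m + k)%nat) as [i [Hi E]]; exists i; split; [exact Hi |].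
    rewrite <- Hk, <- Nat.iter_add; exact E.
  - intros i Hi; destruct (Hreach i Hi) as [n E]; exists (n + (p - 1) * k)%nat.
    rewrite <- Hk, <- Nat.iter_add, (iter_mod g c p _ Hper), <- E, (iter_mod g c p n Hper).
    f_equal; replace (n + (p - 1) * k + k)%nat with (n + k * p)%nat by nia.
    apply Nat.Div0.mod_add.
Qed.

Definition orbit (w : R * R) (k : nat) : R := Nat.iter k (saw (fst w) (snd w)) (1/3).

Lemma orbit_S w k : orbit w (S k) = saw (fst w) (snd w) (orbit w k).
Proof. reflexivity. Qed.

Lemma orbit_one w : inT w -> orbit w 1 = fst w.
Proof. intros HT; apply saw_third, HT. Qed.

Lemma orbit_01 w k : inT w -> 0 <= orbit w k <= 1.
Proof.
  intros HT; induction k as [|k IH]; [simpl; lra |].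
  rewrite orbit_S; apply saw_01; [exact HT | exact IH].
Qed.

(* [a] is the position of [1/3] in the orbit, the first descent of [o]. *)
Definition is_turn (p : nat) (o : nat -> nat) (a : nat) : Prop :=
  (S a < p)%nat /\ (forall i, (S i <= a)%nat -> (o i < o (S i))%nat) /\ (o (S a) < o a)%nat.

Lemma is_turn_unique p o a a' : is_turn p o a -> is_turn p o a' -> a = a'.
Proof.
  intros (_ & Hinc & Hdesc) (_ & Hinc' & Hdesc').
  destruct (Nat.lt_total a a') as [L | [L | L]]; [| exact L |].
  - specialize (Hinc' a L); lia.
  - specialize (Hinc a' L); lia.
Qed.

Definition lap_of (a mu i : nat) : lap :=
  if (i <? a)%nat then Lap1 else if (i <? mu)%nat then Lap2 else Lap3.

Section OrbitOnBone.
Variables (p : nat) (o : nat -> nat) (w : R * R) (x : nat -> R) (a : nat).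
Hypothesis p_ge_2 : (2 <= p)%nat.
Hypothesis o_range : forall i, (i < p)%nat -> (o i < p)%nat.
Hypothesis o_inj : forall i j, (i < p)%nat -> (j < p)%nat -> o i = o j -> i = j.
Hypothesis w_in_T : inT w.
Hypothesis a_lt : (a < p)%nat.
Hypothesis x_a : x a = 1/3.
Hypothesis x_incr : forall i j, (i < j)%nat -> (j < p)%nat -> x i < x j.
Hypothesis x_orbit : forall i, (i < p)%nat -> saw (fst w) (snd w) (x i) = x (o i).
Hypothesis x_reached : forall i, (i < p)%nat -> exists k, orbit w k = x i.

Let Sw := saw (fst w) (snd w).

Lemma x_lt_iff i j : (i < p)%nat -> (j < p)%nat -> x i < x j <-> (i < j)%nat.
Proof.
  intros Hi Hj; split; [| intros; apply x_incr; assumption].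
  intros H; destruct (Nat.lt_total i j) as [L | [L | L]]; [exact L | subst; lra |].
  specialize (x_incr j i L Hi); lra.
Qed.

Lemma x_le_iff i j : (i < p)%nat -> (j < p)%nat -> x i <= x j <-> (i <= j)%nat.
Proof.
  intros Hi Hj; split; intros H.
  - destruct (Nat.le_gt_cases i j) as [L | L]; [exact L |].
    apply (x_lt_iff j i Hj Hi) in L; lra.
  - destruct (Nat.eq_dec i j) as [-> | L]; [lra |].
    left; apply x_lt_iff; [exact Hi | exact Hj | lia].
Qed.

Lemma orbit_x k : orbit w k = x (Nat.iter k o a).
Proof.
  induction k as [|k IH]; [exact (eq_sym x_a) |].
  rewrite orbit_S, IH; apply x_orbit, iter_o_lt; assumption.
Qed.

Lemma x_inj i j : (i < p)%nat -> (j < p)%nat -> x i = x j -> i = j.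
Proof. intros Hi Hj E; apply Nat.le_antisymm; apply x_le_iff; auto; lra. Qed.

Lemma a_reaches i : (i < p)%nat -> exists k, Nat.iter k o a = i.
Proof.
  intros Hi; destruct (x_reached i Hi) as [k Hk]; exists k.
  rewrite orbit_x in Hk; apply x_inj in Hk; [exact Hk | apply iter_o_lt; assumption | exact Hi].
Qed.

Lemma x_o_a : x (o a) = fst w.
Proof. rewrite <- x_orbit, x_a by exact a_lt; apply saw_third, w_in_T. Qed.

Lemma o_lt_of_x_le i j : (i < p)%nat -> (j < p)%nat -> i <> j -> Sw (x i) <= Sw (x j) ->
  (o i < o j)%nat.
Proof.
  intros Hi Hj Hij H; unfold Sw in H; rewrite !x_orbit in H by assumption.
  apply x_le_iff in H; [| apply o_range; exact Hi | apply o_range; exact Hj].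
  enough (o i <> o j) by lia.
  intros E; apply Hij, o_inj; assumption.
Qed.

Lemma o_incr_below_turn i : (S i <= a)%nat -> (o i < o (S i))%nat.
Proof.
  intros H; apply o_lt_of_x_le; [lia | lia | lia |].
  apply saw_incr1; [exact w_in_T |].
  split; [left; apply x_incr; lia | rewrite <- x_a; apply x_le_iff; lia].
Qed.

Lemma o_not_increasing : ~ (forall i, (S i < p)%nat -> (o i < o (S i))%nat).
Proof.
  intros H; assert (Hid := increasing_self_map_id p o o_range H).
  assert (Hfix : forall k, Nat.iter k o a = a).
  { induction k as [|k IH]; [reflexivity |]; simpl; rewrite IH; apply Hid, a_lt. }
  destruct (x_reached 0%nat ltac:(lia)) as [k0 E0], (x_reached 1%nat ltac:(lia)) as [k1 E1].
  rewrite orbit_x, Hfix in E0, E1; specialize (x_incr 0 1 ltac:(lia) ltac:(lia)); lra.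
Qed.

Lemma a_is_turn : is_turn p o a.
Proof.
  assert (Ha1 : (S a < p)%nat).
  { destruct (Nat.lt_ge_cases (S a) p) as [H | H]; [exact H | exfalso].
    apply o_not_increasing; intros i Hi; apply o_incr_below_turn; lia. }
  split; [exact Ha1 | split; [exact o_incr_below_turn |]].
  assert (Hx : 1/3 < x (S a)) by (rewrite <- x_a; apply x_incr; lia).
  destruct (Rle_dec (x (S a)) (2/3)) as [Hle | Hgt].
  - apply o_lt_of_x_le; [lia | lia | lia |].
    unfold Sw; rewrite (x_orbit a a_lt), x_o_a; apply saw_le_w1; [exact w_in_T | exact Hle].
  - destruct (Nat.lt_ge_cases (o (S a)) (o a)) as [L | L]; [exact L | exfalso].
    apply o_not_increasing; intros i Hi.
    destruct (Nat.lt_total i a) as [E | [-> | E]]; [apply o_incr_below_turn; lia | |].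
    + assert (o a <> o (S a)) by (intros E; apply o_inj in E; lia); lia.
    + apply o_lt_of_x_le; [lia | lia | lia |].
      apply saw_incr3; [exact w_in_T |].
      assert (x (S a) <= x i) by (apply x_le_iff; lia).
      assert (x i < x (S i)) by (apply x_incr; lia); lra.
Qed.

Variable mu : nat.
Hypothesis mu_bounds : (a < mu < p)%nat.
Hypothesis mu_min : forall i, (a < i < p)%nat -> (o mu <= o i)%nat.

Lemma x_o_mu_le i : (a < i < p)%nat -> x (o mu) <= x (o i).
Proof. intros H; apply x_le_iff; [apply o_range; lia | apply o_range; lia | apply mu_min, H]. Qed.

Lemma eq_mu_of_le i : (a < i < p)%nat -> Sw (x i) <= Sw (x mu) -> i = mu.
Proof.
  intros H E; unfold Sw in E; rewrite !x_orbit in E by lia.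
  apply x_le_iff in E; [| apply o_range; lia | apply o_range; lia].
  specialize (mu_min i H); apply o_inj; lia.
Qed.

Lemma Sw_ne_fst i : (i < p)%nat -> i <> a -> Sw (x i) <> fst w.
Proof.
  intros Hi Hia E; unfold Sw in E; rewrite x_orbit, <- x_o_a in E by exact Hi.
  apply Hia, o_inj; [exact Hi | exact a_lt |].
  apply x_inj; [apply o_range; exact Hi | apply o_range; exact a_lt | exact E].
Qed.

(* Points left of [1/3] stay on the first lap, points between [1/3] and [x mu] on the
   second and points right of [x mu] on the third: any clipping would produce a value
   [fst w] already taken by [1/3], or a value below [Sw (x mu)], the least image of a
   point right of [1/3]. *)
Lemma x_on_lap i : (i < p)%nat -> i <> a -> i <> mu ->
  on_lap (lap_of a mu i) (x i) /\ Sw (x i) = lap_map (lap_of a mu i) (x i).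
Proof.
  intros Hi Hia Him; destruct w_in_T as (T1 & T2 & T3).
  assert (Hne := Sw_ne_fst i Hi Hia).
  assert (Hx01 : 0 <= x i <= 1) by (destruct (x_reached i Hi) as [k <-]; apply orbit_01, w_in_T).
  unfold lap_of; destruct (Nat.ltb_spec i a) as [L | L]; simpl.
  - assert (x i < 1/3) by (rewrite <- x_a; apply x_incr; lia).
    unfold Sw in *; split; [lra | revert Hne; saw_cases].
  - assert (Ha : 1/3 < x i) by (rewrite <- x_a; apply x_incr; lia).
    assert (Hmu := saw_ge_w2 (fst w) (snd w) w_in_T (x mu) ltac:(rewrite <- x_a; left; apply x_incr; lia)).
    destruct (Nat.ltb_spec i mu) as [M | M]; simpl.
    + assert (x i < x mu) by (apply x_incr; lia).
      assert (x i < 2/3).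
      { destruct (Rlt_dec (x i) (2/3)) as [G | G]; [exact G | exfalso].
        apply Him, eq_mu_of_le; [lia | apply saw_incr3; [exact w_in_T | lra]]. }
      destruct (Rle_dec (snd w) (2 - 3 * x i)).
      * unfold Sw in *; split; [lra | revert Hne; saw_cases].
      * exfalso; apply Him, eq_mu_of_le; [lia | unfold Sw in *; saw_cases].
    + assert (x mu < x i) by (apply x_incr; lia).
      assert (1/3 < x mu) by (rewrite <- x_a; apply x_incr; lia).
      assert (2/3 < x i).
      { destruct (Rlt_dec (2/3) (x i)) as [G | G]; [exact G | exfalso].
        apply Him, eq_mu_of_le; [lia | apply saw_decr2; [exact w_in_T | lra | lra]]. }
      destruct (Rle_dec (snd w) (3 * x i - 2)).
      * unfold Sw in *; split; [lra | saw_cases].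
      * exfalso; apply Him, eq_mu_of_le; [lia | unfold Sw in *; saw_cases].
Qed.

Lemma x_mu_cases : 1/3 < x mu /\
  ((on_lap Lap2 (x mu) /\ Sw (x mu) = lap_map Lap2 (x mu)) \/
   (on_lap Lap3 (x mu) /\ Sw (x mu) = lap_map Lap3 (x mu)) \/
   (Sw (x mu) = snd w /\ (2 - snd w)/3 <= x mu <= (2 + snd w)/3)).
Proof.
  assert (Hx : 1/3 < x mu) by (rewrite <- x_a; apply x_incr; lia).
  assert (Hx1 : x mu <= 1) by (destruct (x_reached mu ltac:(lia)) as [k <-]; apply orbit_01, w_in_T).
  split; [exact Hx |].
  assert (Hne := Sw_ne_fst mu ltac:(lia) ltac:(lia)); destruct w_in_T as (T1 & T2 & T3).
  unfold Sw in *; simpl.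
  destruct (Rle_dec (x mu) (2/3)); [destruct (Rle_dec (snd w) (2 - 3 * x mu)) |
                                     destruct (Rle_dec (snd w) (3 * x mu - 2))].
  - left; split; [lra | revert Hne; saw_cases].
  - right; right; split; [revert Hne; saw_cases | lra].
  - right; left; split; [lra | saw_cases].
  - right; right; split; [saw_cases | lra].
Qed.

End OrbitOnBone.

Lemma bone_minus_orbit p o w : bone Minus p o w -> inT w /\
  exists x a, (a < p)%nat /\ x a = 1/3 /\
    (forall i j, (i < j)%nat -> (j < p)%nat -> x i < x j) /\
    (forall i, (i < p)%nat -> saw (fst w) (snd w) (x i) = x (o i)) /\
    (forall i, (i < p)%nat -> exists k, orbit w k = x i).
Proof.
  intros [HT [x [Hincr [Hall [Hreach Horb]]]]]; split; [exact HT |].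
  destruct (Hall 0%nat) as [a [Ha Hxa]]; exists x, a; repeat split; auto.
Qed.

Definition U_set (A2 A3 b : R) (w : R * R) : Prop :=
  ((fst w = A2 \/ fst w = A3) /\ 0 <= snd w <= b) \/ (snd w = b /\ between A2 A3 (fst w)).

Lemma U_set_sym a1 a2 b w : U_set a1 a2 b w <-> U_set a2 a1 b w.
Proof. unfold U_set, between; tauto. Qed.

Definition odd_U (B : R * R -> Prop) (a1 a2 b : R) : Prop :=
  0 <= a1 < a2 /\ a2 < 1 /\ 0 < b < 1 /\
  odd_triadic a1 /\ odd_triadic a2 /\ odd_triadic b /\
  forall w, B w <-> U_set a1 a2 b w.

Lemma odd_U_of_corners B A2 A3 b : A2 <> A3 -> 0 <= A2 < 1 -> 0 <= A3 < 1 -> 0 < b < 1 ->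
  odd_triadic A2 -> odd_triadic A3 -> odd_triadic b -> (forall w, B w <-> U_set A2 A3 b w) ->
  odd_U B (Rmin A2 A3) (Rmax A2 A3) b.
Proof.
  intros Hne H2 H3 Hb O2 O3 Ob HU; unfold Rmin, Rmax; destruct (Rle_dec A2 A3).
  - repeat (split; [lra || assumption |]); exact HU.
  - repeat (split; [lra || assumption |]); intros w; rewrite U_set_sym; apply HU.
Qed.

Section FixedTurn.
Variables (p : nat) (o : nat -> nat) (a mu k0 : nat).
Hypothesis p_ge_2 : (2 <= p)%nat.
Hypothesis o_range : forall i, (i < p)%nat -> (o i < p)%nat.
Hypothesis o_inj : forall i j, (i < p)%nat -> (j < p)%nat -> o i = o j -> i = j.
Hypothesis a_turn : is_turn p o a.
Hypothesis mu_bounds : (a < mu < p)%nat.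
Hypothesis mu_min : forall i, (a < i < p)%nat -> (o mu <= o i)%nat.
Hypothesis a_reaches : forall i, (i < p)%nat -> exists k, Nat.iter k o a = i.
Hypothesis k0_mu : Nat.iter k0 o a = mu.
Hypothesis k0_lt : (k0 < p)%nat.

Definition itin (k : nat) : lap := lap_of a mu (Nat.iter k o a).

Lemma a_lt : (a < p)%nat.
Proof. destruct a_turn; lia. Qed.

Lemma iter_lt k : (Nat.iter k o a < p)%nat.
Proof. exact (iter_o_lt p o o_range a a_lt k). Qed.

Lemma k0_pos : (0 < k0)%nat.
Proof. destruct k0; [simpl in k0_mu; lia | lia]. Qed.

Lemma succ_pred_k0 : S (pred k0) = k0.
Proof. pose proof k0_pos; lia. Qed.

Lemma iter_o_period_a :
  Nat.iter p o a = a /\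
  forall k l, (k < p)%nat -> (l < p)%nat -> Nat.iter k o a = Nat.iter l o a -> k = l.
Proof. exact (iter_o_period p o o_range o_inj a a_lt a_reaches). Qed.

Lemma itin_k0 : itin k0 = Lap3.
Proof.
  unfold itin, lap_of; rewrite k0_mu, Nat.ltb_irrefl.
  destruct (Nat.ltb_spec mu a); [lia | reflexivity].
Qed.

Lemma iter_o_ne k l : (k < p)%nat -> (l < p)%nat -> k <> l -> Nat.iter k o a <> Nat.iter l o a.
Proof. intros Hk Hl Hkl E; apply Hkl, (proj2 iter_o_period_a); assumption. Qed.

Lemma bone_orbit_x w : bone Minus p o w -> exists x,
  x a = 1/3 /\
  (forall i j, (i < j)%nat -> (j < p)%nat -> x i < x j) /\
  (forall i, (i < p)%nat -> saw (fst w) (snd w) (x i) = x (o i)) /\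
  (forall i, (i < p)%nat -> exists k, orbit w k = x i) /\
  (forall k, orbit w k = x (Nat.iter k o a)).
Proof.
  intros Hb; destruct (bone_minus_orbit p o w Hb) as [HT [x [a' (Ha' & Hxa & Hinc & Hsx & Hrx)]]].
  replace a with a' in * by (apply (is_turn_unique p o); [eapply a_is_turn | exact a_turn]; eauto).
  exists x; repeat split; auto.
  intros k; eapply orbit_x; eauto.
Qed.

Section OnBone.
Variable w : R * R.
Hypothesis w_bone : bone Minus p o w.

Lemma bone_in_T : inT w.
Proof. exact (proj1 w_bone). Qed.

Lemma orbit_period : orbit w p = 1/3.
Proof.
  destruct (bone_orbit_x w w_bone) as [x (Hxa & _ & _ & _ & Hz)].
  rewrite Hz, (proj1 iter_o_period_a); exact Hxa.
Qed.

Lemma orbit_mod k : orbit w k = orbit w (k mod p).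
Proof.
  destruct (bone_orbit_x w w_bone) as [x (_ & _ & _ & _ & Hz)].
  rewrite !Hz, <- (iter_mod o a p k (proj1 iter_o_period_a)); reflexivity.
Qed.

Lemma orbit_lt k l : (k < p)%nat -> (l < p)%nat ->
  (Nat.iter k o a < Nat.iter l o a)%nat -> orbit w k < orbit w l.
Proof.
  intros Hk Hl H; destruct (bone_orbit_x w w_bone) as [x (_ & Hinc & _ & _ & Hz)].
  rewrite !Hz; apply Hinc; [exact H | apply iter_lt].
Qed.

Lemma orbit_inj k l : (1 <= k <= p)%nat -> (1 <= l <= p)%nat -> orbit w k = orbit w l -> k = l.
Proof.
  intros Hk Hl E; rewrite (orbit_mod k), (orbit_mod l) in E.
  assert (Hmod : forall m, (1 <= m <= p)%nat -> (m mod p < p)%nat /\ (m mod p = m \/ m = p)).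
  { intros m Hm; split; [apply Nat.mod_upper_bound; lia |].
    destruct (Nat.eq_dec m p) as [-> | Hne]; [now right | left; apply Nat.mod_small; lia]. }
  destruct (Hmod k Hk) as [Hk' Ek], (Hmod l Hl) as [Hl' El].
  assert (Heq : (k mod p = l mod p)%nat).
  { destruct (Nat.lt_total (Nat.iter (k mod p) o a) (Nat.iter (l mod p) o a)) as [L | [L | L]].
    - apply orbit_lt in L; [lra | exact Hk' | exact Hl'].
    - apply (proj2 iter_o_period_a); assumption.
    - apply orbit_lt in L; [lra | exact Hl' | exact Hk']. }
  destruct Ek as [Ek | ->], El as [El | ->]; rewrite ?Nat.Div0.mod_same in Heq; lia.
Qed.

Lemma orbit_on_lap k : (0 < k < p)%nat -> k <> k0 ->
  on_lap (itin k) (orbit w k) /\ orbit w (S k) = lap_map (itin k) (orbit w k).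
Proof.
  intros Hk Hkk0; destruct (bone_orbit_x w w_bone) as [x (Hxa & Hinc & Hsx & Hrx & Hz)].
  unfold itin; rewrite orbit_S, !Hz.
  apply (x_on_lap p o w x a); auto; [exact bone_in_T | exact a_lt | apply iter_lt | |].
  - apply (iter_o_ne k 0); lia.
  - rewrite <- k0_mu; apply iter_o_ne; lia.
Qed.

Lemma orbit_follows m n : (0 < m)%nat -> (n <= k0 \/ k0 < m)%nat -> (n <= p)%nat ->
  follows itin (orbit w) m n.
Proof. intros Hm Hmn Hn k Hk; apply orbit_on_lap; lia. Qed.

Lemma orbit_turn : 1/3 < orbit w k0 /\
  ((on_lap Lap2 (orbit w k0) /\ orbit w (S k0) = lap_map Lap2 (orbit w k0)) \/
   (on_lap Lap3 (orbit w k0) /\ orbit w (S k0) = lap_map Lap3 (orbit w k0)) \/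
   (orbit w (S k0) = snd w /\ (2 - snd w)/3 <= orbit w k0 <= (2 + snd w)/3)).
Proof.
  destruct (bone_orbit_x w w_bone) as [x (Hxa & Hinc & Hsx & Hrx & Hz)].
  rewrite orbit_S, Hz, k0_mu.
  apply (x_mu_cases p o w x a); auto; [exact bone_in_T | exact a_lt].
Qed.

Lemma orbit_below_fst k : (0 < k < p)%nat -> itin k <> Lap3 -> orbit w (S k) < fst w.
Proof.
  intros Hk He.
  assert (Hle : orbit w (S k) <= fst w).
  { rewrite orbit_S; apply saw_le_w1; [exact bone_in_T |].
    destruct (Nat.eq_dec k k0) as [-> | Hkk0].
    - now rewrite itin_k0 in He.
    - destruct (orbit_on_lap k Hk Hkk0) as [Hl _]; destruct (itin k); simpl in Hl; first [easy | lra]. }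
  destruct Hle as [Hlt | Heq]; [exact Hlt |].
  rewrite <- (orbit_one w bone_in_T) in Heq; apply orbit_inj in Heq; lia.
Qed.

Lemma orbit_above_beta k : (0 < k < p)%nat -> k <> k0 -> itin k <> Lap1 ->
  orbit w (S k0) < orbit w (S k).
Proof.
  intros Hk Hkk0 He; destruct (bone_orbit_x w w_bone) as [x (Hxa & Hinc & Hsx & Hrx & Hz)].
  assert (Hle : orbit w (S k0) <= orbit w (S k)).
  { rewrite !orbit_S, !Hz, k0_mu, !Hsx by (apply iter_lt || lia).
    apply (x_o_mu_le p o x a p_ge_2 o_range a_lt Hinc mu mu_bounds mu_min).
    split; [| apply iter_lt].
    unfold itin, lap_of in He; destruct (Nat.ltb_spec (Nat.iter k o a) a); [congruence |].
    enough (Nat.iter k o a <> a) by lia; apply (iter_o_ne k 0); lia. }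
  destruct Hle as [Hlt | Heq]; [exact Hlt | apply orbit_inj in Heq; lia].
Qed.

Lemma orbit_unclipped k v : (0 < k < p)%nat -> k <> k0 -> v <= orbit w (S k0) ->
  unclipped (fst w) v (itin k) (orbit w (S k)).
Proof.
  intros Hk Hkk0 Hv; apply unclipped_of_bounds; intros He.
  - left; apply orbit_below_fst; assumption.
  - left; apply (Rle_lt_trans _ _ _ Hv), orbit_above_beta; assumption.
Qed.

Lemma fst_lt_1 : fst w < 1.
Proof.
  destruct bone_in_T as (T1 & T2 & T3).
  destruct (Rlt_dec (fst w) 1) as [L | L]; [exact L | exfalso].
  assert (E : orbit w 2 = orbit w 1).
  { rewrite orbit_S, (orbit_one w bone_in_T); unfold saw, Rmin, Rmax.
    repeat destruct Rle_dec; lra. }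
  apply orbit_inj in E; lia.
Qed.

Lemma beta_pos : 0 < orbit w (S k0).
Proof.
  destruct (orbit_01 w (S k0) bone_in_T) as [[L | L] _]; [exact L | exfalso].
  destruct (Nat.eq_dec (S k0) p) as [E | E].
  - rewrite E, orbit_period in L; lra.
  - assert (E2 : orbit w (S (S k0)) = orbit w (S k0)).
    { destruct bone_in_T as (T1 & T2 & T3).
      rewrite orbit_S, <- L; unfold saw, Rmin, Rmax; repeat destruct Rle_dec; lra. }
    apply orbit_inj in E2; lia.
Qed.

Lemma beta_lt_fst : orbit w (S k0) < fst w.
Proof.
  destruct (bone_orbit_x w w_bone) as [x (Hxa & Hinc & Hsx & Hrx & Hz)].
  rewrite orbit_S, Hz, k0_mu, Hsx by lia.
  rewrite <- (x_o_a p o w x a bone_in_T a_lt Hxa Hsx).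
  apply Hinc; [| destruct a_turn; apply o_range; lia].
  assert (H := mu_min (S a)); destruct a_turn as (? & _ & ?); specialize (H ltac:(lia)); lia.
Qed.

End OnBone.

Lemma bone_minus_of_orbit w : inT w -> orbit w p = 1/3 ->
  (forall k l, (k < p)%nat -> (l < p)%nat ->
     (Nat.iter k o a < Nat.iter l o a)%nat -> orbit w k < orbit w l) ->
  bone Minus p o w.
Proof.
  intros HT Hper Hord; split; [exact HT |].
  destruct (iter_o_inverse p o o_range o_inj a a_lt a_reaches) as [tau Htau].
  assert (Htau_eq : forall k, (k < p)%nat -> tau (Nat.iter k o a) = k).
  { intros k Hk; destruct (Htau (Nat.iter k o a)) as [Ht E]; [apply iter_lt |].
    apply (proj2 iter_o_period_a); assumption. }
  assert (Hmod : forall k, orbit w k = orbit w (k mod p)) by (intros k; exact (iter_mod _ _ p k Hper)).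
  exists (fun i => orbit w (tau i)); repeat split.
  - intros i j Hij Hj; destruct (Htau i ltac:(lia)) as [Hi Ei], (Htau j Hj) as [Hj' Ej].
    apply Hord; [exact Hi | exact Hj' | rewrite Ei, Ej; exact Hij].
  - intros k; exists (Nat.iter (k mod p) o a); split; [apply iter_lt |].
    rewrite Htau_eq by (apply Nat.mod_upper_bound; lia); apply Hmod.
  - intros i Hi; exists (tau i); reflexivity.
  - intros i Hi; destruct (Htau i Hi) as [Ht Ei].
    change (saw (fst w) (snd w) (orbit w (tau i))) with (orbit w (S (tau i))).
    destruct (Nat.eq_dec (S (tau i)) p) as [E | E].
    + assert (Hoi : o i = a).
      { rewrite <- Ei; change (Nat.iter (S (tau i)) o a = a); rewrite E; exact (proj1 iter_o_period_a). }
      rewrite Hoi, E, Hper, (Htau_eq 0%nat ltac:(lia) : tau a = 0%nat); reflexivity.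
    + rewrite <- (Htau_eq (S (tau i))) by lia; simpl; rewrite Ei; reflexivity.
Qed.

Lemma bone_minus_transfer w w' : bone Minus p o w -> inT w' ->
  (forall k, (k < p)%nat -> saw (fst w') (snd w') (orbit w k) = saw (fst w) (snd w) (orbit w k)) ->
  bone Minus p o w' /\ forall k, orbit w' k = orbit w k.
Proof.
  intros Hb HT' Hagree.
  assert (Hz : forall k, orbit w' k = orbit w k).
  { induction k as [|k IH]; [reflexivity |].
    rewrite !orbit_S, IH, (orbit_mod w Hb k), Hagree, <- (orbit_mod w Hb k);
      [reflexivity | apply Nat.mod_upper_bound; lia]. }
  split; [| exact Hz].
  apply bone_minus_of_orbit; [exact HT' | rewrite Hz; apply orbit_period, Hb |].
  intros k l Hk Hl H; rewrite !Hz; apply orbit_lt; assumption.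
Qed.

Lemma bone_change_w2 w v : bone Minus p o w -> 0 <= v <= orbit w (S k0) ->
  saw (fst w) v (orbit w k0) = orbit w (S k0) ->
  bone Minus p o (fst w, v) /\ forall k, orbit (fst w, v) k = orbit w k.
Proof.
  intros Hb Hv Hturn.
  assert (HT : inT w) by exact (bone_in_T w Hb).
  assert (HT' : inT (fst w, v)).
  { assert (H := beta_lt_fst w Hb); destruct HT as (? & ? & ?); unfold inT; cbn [fst snd]; lra. }
  apply (bone_minus_transfer w); [exact Hb | exact HT' |].
  intros k Hk; simpl.
  destruct (Nat.eq_dec k 0) as [-> | Hk0]; [rewrite !saw_third by assumption; reflexivity |].
  destruct (Nat.eq_dec k k0) as [-> | Hkk0]; [exact Hturn |].
  destruct (orbit_on_lap w Hb k ltac:(lia) Hkk0) as [Hl Hs].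
  change (saw (fst w) (snd w) (orbit w k)) with (orbit w (S k)); rewrite Hs.
  apply saw_lap; [exact HT' | exact Hl |].
  rewrite <- Hs; apply orbit_unclipped; [exact Hb | lia | exact Hkk0 | lra].
Qed.

Fixpoint track (k : nat) (t : R) : R :=
  match k with O => t | S k' => lap_map (itin (S k')) (track k' t) end.

Lemma orbit_track w k : bone Minus p o w -> (k < k0)%nat -> orbit w (S k) = track k (fst w).
Proof.
  intros Hb; induction k as [|k IH]; intros Hk; [exact (orbit_one w (bone_in_T w Hb)) |].
  simpl; rewrite <- IH by lia; apply (orbit_on_lap w Hb (S k)); lia.
Qed.

Lemma track_affine k : exists c d, d <> 0 /\ forall t, track k t = c + d * t.
Proof.
  induction k as [|k [c [d [Hd H]]]]; [exists 0, 1; split; [lra | intro; simpl; ring] |].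
  destruct (lap_map_affine (itin (S k)) c d Hd) as [c' [d' [Hd' H']]].
  exists c', d'; split; [exact Hd' | intro t; simpl; rewrite H; apply H'].
Qed.

Lemma track_is_affine k : affine (track k).
Proof. destruct (track_affine k) as [c [d [_ H]]]; exists c, d; exact H. Qed.

Lemma track_onto k v : exists s, track k s = v.
Proof.
  destruct (track_affine k) as [c [d [Hd H]]].
  exists ((v - c) / d); rewrite H; field; exact Hd.
Qed.

(** * The horizontal edge of a bone *)

Section AlongPlateau.
Variables t0 b : R.
Hypothesis base_bone : bone Minus p o (t0, b).
Hypothesis base_plateau : (2 - b)/3 <= orbit (t0, b) k0 <= (2 + b)/3.
Local Notation w0 := (t0, b).

Definition on_plateau (s : R) : Prop := (2 - b)/3 <= track (pred k0) s <= (2 + b)/3.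

(* The orbit of [(s, b)] predicted from that of [w0]: only the times [1 .. k0], which
   precede the plateau, depend on [s]. *)
Definition cand (s : R) (k : nat) : R :=
  if andb (1 <=? k)%nat (k <=? k0)%nat then track (pred k) s else orbit w0 k.

Lemma base_in_T : inT w0.
Proof. exact (bone_in_T w0 base_bone). Qed.

Lemma base_beta : orbit w0 (S k0) = b.
Proof. rewrite orbit_S; apply saw_plateau; [exact base_in_T | exact base_plateau]. Qed.

Lemma b_pos : 0 < b.
Proof. rewrite <- base_beta; exact (beta_pos w0 base_bone). Qed.

Lemma b_lt_t0 : b < t0.
Proof. rewrite <- base_beta at 1; exact (beta_lt_fst w0 base_bone). Qed.

Lemma b_lt_1 : b < 1.
Proof. pose proof b_lt_t0; pose proof (fst_lt_1 w0 base_bone); simpl in *; lra. Qed.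

Lemma track_base k : (k < k0)%nat -> track k t0 = orbit w0 (S k).
Proof. intros Hk; symmetry; exact (orbit_track w0 k base_bone Hk). Qed.

Lemma on_plateau_base : on_plateau t0.
Proof.
  unfold on_plateau; rewrite track_base, succ_pred_k0; [exact base_plateau | pose proof k0_pos; lia].
Qed.

Lemma on_plateau_interp s l : on_plateau s -> 0 <= l <= 1 -> on_plateau (t0 + l * (s - t0)).
Proof.
  unfold on_plateau; intros Hs Hl; rewrite affine_interp by apply track_is_affine.
  pose proof on_plateau_base; unfold on_plateau in *; nra.
Qed.

Lemma track_01 s k : on_plateau s -> (k <= pred k0)%nat -> 0 <= track k s <= 1.
Proof.
  intros Hs Hk; pose proof b_pos as Hb_pos; pose proof b_lt_1 as Hb_lt_1.
  apply (backward_ind (fun k => 0 <= track k s <= 1) 0 (pred k0)); [unfold on_plateau in Hs; lra | | lia].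
  intros j _ Hj; apply (on_lap_01 (itin (S j))), on_lap_of_image; exact Hj.
Qed.

Lemma track_on_lap s k : on_plateau s -> (k < pred k0)%nat -> on_lap (itin (S k)) (track k s).
Proof. intros Hs Hk; apply on_lap_of_image; exact (track_01 s (S k) Hs Hk). Qed.

Definition tail_point (y : R) : Prop := y = 1 \/ exists l, (k0 < l <= p)%nat /\ y = orbit w0 l.

(* Tail points are mapped to tail points, and none of them lies on the plateau. *)
Lemma track_avoids_tail s k : on_plateau s -> (k <= pred k0)%nat -> ~ tail_point (track k s).
Proof.
  intros Hs Hk; pose proof b_pos as Hb_pos; pose proof b_lt_1 as Hb_lt_1.
  apply (backward_ind (fun k => ~ tail_point (track k s)) 0 (pred k0)); [| | lia].
  - unfold on_plateau in Hs; intros [E | [l [Hl E]]]; [lra |]; rewrite E in Hs.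
    destruct (Nat.eq_dec l p) as [-> | Hlp]; [rewrite orbit_period in Hs by exact base_bone; lra |].
    assert (Hl' : orbit w0 (S l) = orbit w0 (S k0)).
    { rewrite base_beta, orbit_S; apply saw_plateau; [exact base_in_T | exact Hs]. }
    apply orbit_inj in Hl'; [lia | exact base_bone | lia | lia].
  - intros j Hj Hnot Htail; apply Hnot; simpl.
    assert (Hlap := track_on_lap s j Hs ltac:(lia)).
    destruct Htail as [E | [l [Hl E]]]; rewrite E in *.
    + left; apply lap_map_to_one; [exact Hlap | right; reflexivity].
    + destruct (Nat.eq_dec l p) as [-> | Hlp].
      * left; rewrite orbit_period in Hlap |- * by exact base_bone.
        apply lap_map_to_one; [exact Hlap | left; reflexivity].
      * right; exists (S l); split; [lia |].
        destruct (orbit_on_lap w0 base_bone l ltac:(lia) ltac:(lia)) as [Hl' Hs'].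
        rewrite Hs'; apply lap_map_agree; assumption.
Qed.

Lemma track_off_plateau s m : on_plateau s -> (m < pred k0)%nat ->
  ~ ((2 - b)/3 <= track m s <= (2 + b)/3).
Proof.
  intros Hs Hm Hin; pose proof b_pos as Hb_pos; pose proof b_lt_1 as Hb_lt_1.
  assert (Hbase : ~ ((2 - b)/3 <= track m t0 <= (2 + b)/3)).
  { rewrite track_base by lia; intros Hin0.
    assert (E : orbit w0 (S (S m)) = orbit w0 (S k0)).
    { rewrite base_beta, orbit_S; apply saw_plateau; [exact base_in_T | exact Hin0]. }
    apply orbit_inj in E; [lia | exact base_bone | lia | lia]. }
  assert (Hcross : exists s', on_plateau s' /\ (track m s' = (2 - b)/3 \/ track m s' = (2 + b)/3)).
  { destruct (Rlt_dec (track m t0) ((2 - b)/3)) as [L | L].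
    - destruct (affine_ivt (track m) t0 s ((2 - b)/3) (track_is_affine m) ltac:(lra)) as [l [Hl E]].
      exists (t0 + l * (s - t0)); split; [apply on_plateau_interp; assumption | left; exact E].
    - destruct (affine_ivt (track m) t0 s ((2 + b)/3) (track_is_affine m) ltac:(lra)) as [l [Hl E]].
      exists (t0 + l * (s - t0)); split; [apply on_plateau_interp; assumption | right; exact E]. }
  destruct Hcross as [s' [Hs' Hend]].
  apply (track_avoids_tail s' (S m) Hs' ltac:(lia)); right; exists (S k0); split; [lia |].
  rewrite base_beta; simpl; apply lap_map_plateau_edge; [lra | exact Hend |].
  exact (track_on_lap s' m Hs' Hm).
Qed.

Lemma track_inj s k l : on_plateau s -> (k < l <= pred k0)%nat -> track k s <> track l s.
Proof.
  intros Hs Hkl E.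
  assert (Hpush : forall j, (l + j <= pred k0)%nat -> track (k + j) s = track (l + j) s).
  { induction j as [|j IH]; intros Hj; [rewrite !Nat.add_0_r; exact E |].
    rewrite !Nat.add_succ_r; simpl; rewrite IH by lia.
    apply lap_map_agree; [rewrite <- IH by lia |]; apply track_on_lap; (assumption || lia). }
  apply (track_off_plateau s (k + (pred k0 - l)) Hs ltac:(lia)).
  rewrite Hpush, Nat.add_sub_assoc, Nat.add_comm, Nat.add_sub by lia; exact Hs.
Qed.

Lemma cand_moving s k : (1 <= k <= k0)%nat -> cand s k = track (pred k) s.
Proof.
  intros Hk; unfold cand.
  destruct (Nat.leb_spec 1 k), (Nat.leb_spec k k0); simpl; [reflexivity | lia..].
Qed.

Lemma cand_fixed s k : (k = 0 \/ k0 < k)%nat -> cand s k = orbit w0 k.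
Proof.
  intros Hk; unfold cand.
  destruct (Nat.leb_spec 1 k), (Nat.leb_spec k k0); simpl; [lia | reflexivity..].
Qed.

Lemma cand_base k : cand t0 k = orbit w0 k.
Proof.
  destruct (Nat.eq_dec k 0) as [-> | Hk0]; [apply cand_fixed; lia |].
  destruct (Nat.le_gt_cases k k0) as [Hle | Hgt]; [| apply cand_fixed; lia].
  rewrite cand_moving, track_base by lia; f_equal; lia.
Qed.

Lemma cand_affine k : affine (fun s => cand s k).
Proof.
  destruct (Nat.eq_dec k 0) as [-> | Hk0];
    [exists (orbit w0 0), 0; intro; rewrite cand_fixed by lia; ring |].
  destruct (Nat.le_gt_cases k k0) as [Hle | Hgt];
    [| exists (orbit w0 k), 0; intro; rewrite cand_fixed by lia; ring].
  destruct (track_is_affine (pred k)) as [c [d H]].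
  exists c, d; intro; rewrite cand_moving by lia; apply H.
Qed.

Lemma cand_ne s k l : on_plateau s -> (k <= p)%nat -> (l <= p)%nat ->
  orbit w0 k <> orbit w0 l -> cand s k <> cand s l.
Proof.
  intros Hs Hk Hl Hne.
  assert (Htail : forall m n, (1 <= m <= k0)%nat -> (n = 0 \/ k0 < n <= p)%nat ->
                    cand s m <> cand s n).
  { intros m n Hm Hn E; rewrite cand_moving, cand_fixed in E by lia.
    apply (track_avoids_tail s (pred m) Hs ltac:(lia)); right.
    destruct Hn as [-> | Hn]; [exists p; split; [lia |] | exists n; split; [lia |]];
      rewrite E; [symmetry; apply orbit_period, base_bone | reflexivity]. }
  destruct (Nat.le_gt_cases k k0) as [Hk' | Hk'], (Nat.eq_dec k 0) as [-> | Hk0];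
  destruct (Nat.le_gt_cases l k0) as [Hl' | Hl'], (Nat.eq_dec l 0) as [-> | Hl0];
    try (rewrite !cand_fixed by lia; exact Hne);
    try (apply Htail; lia);
    try (intros E; symmetry in E; revert E; apply Htail; lia).
  rewrite !cand_moving by lia.
  destruct (Nat.lt_total k l) as [L | [-> | L]]; [apply track_inj; (assumption || lia) | easy |].
  intros E; symmetry in E; revert E; apply track_inj; (assumption || lia).
Qed.

(* The candidates are affine in [s] and never collide on the plateau interval, so they
   keep the order they have at [s = t0]. *)
Lemma cand_lt s k l : on_plateau s -> (k <= p)%nat -> (l <= p)%nat ->
  orbit w0 k < orbit w0 l -> cand s k < cand s l.
Proof.
  intros Hs Hk Hl Hlt.
  destruct (Rlt_dec (cand s k) (cand s l)) as [L | L]; [exact L | exfalso].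
  set (f u := cand u l - cand u k).
  destruct (affine_ivt f t0 s 0) as [m [Hm E]].
  - apply affine_sub; apply cand_affine.
  - unfold f; rewrite !cand_base; lra.
  - apply (cand_ne (t0 + m * (s - t0)) k l (on_plateau_interp s m Hs Hm) Hk Hl); [lra |].
    unfold f in E; lra.
Qed.

Lemma param_le_1 s : on_plateau s -> s <= 1.
Proof. intros Hs; exact (proj2 (track_01 s 0 Hs ltac:(lia))). Qed.

Lemma b_lt_param s : on_plateau s -> b < s.
Proof.
  intros Hs; pose proof k0_pos as Hk0_pos.
  assert (H := cand_lt s (S k0) 1 Hs ltac:(lia) ltac:(lia)).
  rewrite cand_fixed, cand_moving, base_beta, (orbit_one w0 base_in_T) in H by lia.
  apply H, b_lt_t0.
Qed.

Lemma cand_step s k : on_plateau s -> (0 < k < p)%nat -> k <> k0 ->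
  on_lap (itin k) (cand s k) /\ cand s (S k) = lap_map (itin k) (cand s k).
Proof.
  intros Hs Hk Hkk0.
  destruct (Nat.lt_ge_cases k k0) as [L | L].
  - rewrite !cand_moving by lia.
    destruct k as [|k]; [lia |]; cbn [pred].
    split; [apply track_on_lap; [exact Hs | lia] | reflexivity].
  - rewrite !cand_fixed by lia; apply orbit_on_lap; [exact base_bone | lia | exact Hkk0].
Qed.

Lemma cand_unclipped s k : on_plateau s -> (0 < k < p)%nat -> k <> k0 ->
  unclipped s b (itin k) (cand s (S k)).
Proof.
  intros Hs Hk Hkk0; pose proof k0_pos as Hk0_pos.
  apply unclipped_of_bounds; intros He; left.
  - replace s with (cand s 1) at 2 by (rewrite cand_moving by lia; reflexivity).
    apply cand_lt; [exact Hs | lia | lia |].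
    rewrite (orbit_one w0 base_in_T); apply orbit_below_fst; [exact base_bone | exact Hk | exact He].
  - replace b with (cand s (S k0)) at 1 by (rewrite cand_fixed, base_beta by lia; reflexivity).
    apply cand_lt; [exact Hs | lia | lia |].
    apply orbit_above_beta; [exact base_bone | exact Hk | exact Hkk0 | exact He].
Qed.

Lemma orbit_cand s k : on_plateau s -> (k <= p)%nat -> orbit (s, b) k = cand s k.
Proof.
  intros Hs; pose proof k0_pos as Hk0_pos.
  assert (HT : inT (s, b)).
  { pose proof (param_le_1 s Hs); pose proof (b_lt_param s Hs); pose proof b_pos as Hb_pos; unfold inT; cbn [fst snd]; lra. }
  induction k as [|k IH]; intros Hk; [rewrite cand_fixed by lia; reflexivity |].
  rewrite orbit_S, IH by lia; simpl.
  destruct (Nat.eq_dec k 0) as [-> | Hk0].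
  - rewrite cand_fixed, cand_moving by lia; apply saw_third, HT.
  - destruct (Nat.eq_dec k k0) as [-> | Hkk0].
    + rewrite cand_moving, cand_fixed, base_beta by lia; apply saw_plateau; [exact HT | exact Hs].
    + destruct (cand_step s k Hs ltac:(lia) Hkk0) as [Hl Hstep]; rewrite Hstep.
      apply saw_lap; [exact HT | exact Hl | rewrite <- Hstep; apply cand_unclipped; (assumption || lia)].
Qed.

Lemma bone_on_plateau s : on_plateau s ->
  bone Minus p o (s, b) /\ orbit (s, b) k0 = track (pred k0) s.
Proof.
  intros Hs; pose proof k0_pos as Hk0_pos.
  split; [| rewrite (orbit_cand s k0 Hs), cand_moving by lia; reflexivity].
  apply bone_minus_of_orbit.
  - pose proof (param_le_1 s Hs); pose proof (b_lt_param s Hs); pose proof b_pos as Hb_pos; unfold inT; cbn [fst snd]; lra.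
  - rewrite (orbit_cand s p Hs), cand_fixed by lia; apply orbit_period, base_bone.
  - intros k l Hk Hl H; rewrite !orbit_cand by (assumption || lia).
    apply cand_lt; [exact Hs | lia | lia | apply orbit_lt; assumption].
Qed.

Lemma on_plateau_iff A2 A3 s :
  track (pred k0) A2 = plateau_end Lap2 b -> track (pred k0) A3 = plateau_end Lap3 b ->
  on_plateau s <-> between A2 A3 s.
Proof.
  intros E2 E3; pose proof b_pos as Hb; unfold on_plateau, between.
  destruct (track_affine (pred k0)) as [c [d [Hd H]]]; rewrite H in *; simpl in E2, E3.
  destruct (Rlt_dec 0 d) as [D | D].
  - assert (A2 < A3) by nra; split; [intros [L U]; left; split; nra |].
    intros [[L U] | [L U]]; [split; nra | lra].
  - assert (A3 < A2) by nra; split; [intros [L U]; right; split; nra |].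
    intros [[L U] | [L U]]; [lra | split; nra].
Qed.

Definition itin_turning (e : lap) (k : nat) : lap := if (k =? k0)%nat then e else itin k.

Section Corner.
Variables (e : lap) (A : R).
Hypothesis e_turns : e <> Lap1.
Hypothesis A_corner : track (pred k0) A = plateau_end e b.

Lemma corner_on_plateau : on_plateau A.
Proof. unfold on_plateau; rewrite A_corner; apply plateau_end_bounds; pose proof b_pos; lra. Qed.

Lemma corner_bone : bone Minus p o (A, b).
Proof. exact (proj1 (bone_on_plateau A corner_on_plateau)). Qed.

Lemma corner_turn : orbit (A, b) k0 = plateau_end e b.
Proof. rewrite <- A_corner; exact (proj2 (bone_on_plateau A corner_on_plateau)). Qed.

Lemma corner_beta : orbit (A, b) (S k0) = b.
Proof.
  rewrite orbit_S, corner_turn; apply saw_plateau; [exact (bone_in_T _ corner_bone) |].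
  apply plateau_end_bounds; pose proof b_pos; lra.
Qed.

Lemma corner_follows : follows (itin_turning e) (orbit (A, b)) 1 p.
Proof.
  intros k Hk; unfold itin_turning; destruct (Nat.eqb_spec k k0) as [-> | Hkk0].
  - rewrite corner_beta, corner_turn, lap_map_plateau_end by exact e_turns; reflexivity.
  - apply orbit_on_lap; [exact corner_bone | lia | exact Hkk0].
Qed.

Lemma corner_odd : odd_triadic A.
Proof.
  replace A with (orbit (A, b) 1) by exact (orbit_one _ (bone_in_T _ corner_bone)).
  apply (follows_odd_triadic _ _ 1 p corner_follows); [| lia].
  rewrite orbit_period by exact corner_bone; exact odd_triadic_third.
Qed.

Lemma bone_vertical v : 0 <= v <= b -> bone Minus p o (A, v).
Proof.
  intros Hv; pose proof (b_lt_param A corner_on_plateau).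
  apply (bone_change_w2 (A, b) v corner_bone); [rewrite corner_beta; exact Hv |].
  rewrite corner_turn, corner_beta; simpl; apply saw_plateau_end; [| exact e_turns | lra].
  pose proof (param_le_1 A corner_on_plateau); unfold inT; cbn [fst snd]; lra.
Qed.

(* A bone point turning on lap [e] has the same orbit as the corner from time 1 on. *)
Lemma bone_turning_on_lap w : bone Minus p o w ->
  on_lap e (orbit w k0) -> orbit w (S k0) = lap_map e (orbit w k0) ->
  fst w = A /\ 0 <= snd w <= b.
Proof.
  intros Hw Hl Hturn.
  assert (Hsame : forall k, (1 <= k <= p)%nat -> orbit w k = orbit (A, b) k).
  { apply (follows_unique (itin_turning e)); [| exact corner_follows |].
    - intros k Hk; unfold itin_turning; destruct (Nat.eqb_spec k k0) as [-> | Hkk0];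
        [exact Hturn | apply orbit_on_lap; [exact Hw | lia | exact Hkk0]].
    - rewrite !orbit_period by (exact Hw || exact corner_bone); reflexivity. }
  pose proof k0_pos as Hk0_pos; destruct (bone_in_T w Hw) as (T1 & T2 & T3).
  split.
  - rewrite <- (orbit_one w (bone_in_T w Hw)), Hsame by lia.
    exact (orbit_one _ (bone_in_T _ corner_bone)).
  - split; [lra |]; rewrite <- corner_beta, <- Hsame by lia.
    rewrite orbit_S; apply saw_ge_w2; [exact (bone_in_T w Hw) | exact (Rlt_le _ _ (proj1 (orbit_turn w Hw)))].
Qed.

End Corner.

(* A bone point flattened by the plateau shares the tail of the orbit of [w0]. *)
Lemma bone_turning_on_plateau w : bone Minus p o w ->
  orbit w (S k0) = snd w -> (2 - snd w)/3 <= orbit w k0 <= (2 + snd w)/3 ->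
  snd w = b /\ on_plateau (fst w).
Proof.
  intros Hw Hturn Hpl.
  assert (Hbeta : orbit w (S k0) = b).
  { rewrite <- base_beta; apply (follows_unique itin _ _ (S k0) p);
      [apply orbit_follows; (exact Hw || lia) | apply orbit_follows; (exact base_bone || lia) | | lia].
    rewrite !orbit_period by (exact Hw || exact base_bone); reflexivity. }
  split; [congruence |].
  unfold on_plateau; rewrite <- orbit_track, succ_pred_k0; [| exact Hw | pose proof k0_pos; lia].
  rewrite <- Hbeta, Hturn; exact Hpl.
Qed.

Lemma bone_iff_U_set A2 A3 w :
  track (pred k0) A2 = plateau_end Lap2 b -> track (pred k0) A3 = plateau_end Lap3 b ->
  bone Minus p o w <-> U_set A2 A3 b w.
Proof.
  intros E2 E3; split.
  - intros Hw; destruct (orbit_turn w Hw) as [_ [[Hl Hs] | [[Hl Hs] | [Hs Hpl]]]].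
    + left; destruct (bone_turning_on_lap Lap2 A2 ltac:(easy) E2 w Hw Hl Hs); auto.
    + left; destruct (bone_turning_on_lap Lap3 A3 ltac:(easy) E3 w Hw Hl Hs); auto.
    + right; destruct (bone_turning_on_plateau w Hw Hs Hpl) as [Hb Hp].
      split; [exact Hb | apply (on_plateau_iff A2 A3); assumption].
  - destruct w as [w1 w2]; unfold U_set; simpl.
    intros [[[-> | ->] Hv] | [-> Hbw]].
    + exact (bone_vertical Lap2 A2 ltac:(easy) E2 w2 Hv).
    + exact (bone_vertical Lap3 A3 ltac:(easy) E3 w2 Hv).
    + apply bone_on_plateau, (on_plateau_iff A2 A3); assumption.
Qed.

Lemma b_odd : odd_triadic b.
Proof.
  rewrite <- base_beta; apply (follows_odd_triadic itin _ (S k0) p);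
    [apply orbit_follows; (exact base_bone || lia) | | lia].
  rewrite orbit_period by exact base_bone; exact odd_triadic_third.
Qed.

Lemma plateau_bone_odd_U : exists a1 a2, odd_U (bone Minus p o) a1 a2 b /\
  exists s, a1 < s < a2 /\ bone Minus p o (s, b) /\ orbit (s, b) k0 = 2/3.
Proof.
  pose proof b_pos; pose proof b_lt_1.
  destruct (track_onto (pred k0) (plateau_end Lap2 b)) as [A2 E2].
  destruct (track_onto (pred k0) (plateau_end Lap3 b)) as [A3 E3].
  destruct (track_onto (pred k0) (2/3)) as [s Es].
  assert (HA : forall e A, e <> Lap1 -> track (pred k0) A = plateau_end e b ->
                 0 <= A < 1 /\ odd_triadic A).
  { intros e A He EA; split; [| exact (corner_odd e A He EA)].
    pose proof (b_lt_param A (corner_on_plateau e A EA)).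
    pose proof (fst_lt_1 _ (corner_bone e A EA)); simpl in *; lra. }
  destruct (HA Lap2 A2 ltac:(easy) E2), (HA Lap3 A3 ltac:(easy) E3).
  assert (Hne : forall A A', track (pred k0) A = A' -> A' <> 2/3 -> s <> A)
    by (intros A A' EA HA' ->; congruence).
  assert (Hs : on_plateau s) by (unfold on_plateau; rewrite Es; lra).
  assert (Hbet := proj1 (on_plateau_iff A2 A3 s E2 E3) Hs).
  assert (Hs2 := Hne A2 _ E2 ltac:(simpl; lra)); assert (Hs3 := Hne A3 _ E3 ltac:(simpl; lra)).
  destruct (bone_on_plateau s Hs) as [Hbs Hzs].
  exists (Rmin A2 A3), (Rmax A2 A3); split.
  - apply odd_U_of_corners; try assumption; [intros ->; simpl in E2, E3; lra | lra | exact b_odd |].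
    intros w; apply bone_iff_U_set; assumption.
  - exists s; split; [| split; [exact Hbs | rewrite Hzs; exact Es]].
    unfold between, Rmin, Rmax in *; destruct (Rle_dec A2 A3); lra.
Qed.

End AlongPlateau.

Lemma bone_plus_of_orbit w k : bone Minus p o w -> orbit w k = 2/3 -> bone Plus p o w.
Proof.
  intros [HT Hpot] Hk; split; [exact HT |].
  apply (periodic_order_type_shift _ (1/3) _ p o k); [lia | exact Hpot | exact Hk |].
  exact (orbit_period w (conj HT Hpot)).
Qed.

(* Raising [w2] to [beta = orbit w (S k0)] keeps the orbit and flattens it at time [k0]. *)
Lemma bone_plateau_base w : bone Minus p o w ->
  bone Minus p o (fst w, orbit w (S k0)) /\
  (2 - orbit w (S k0))/3 <= orbit (fst w, orbit w (S k0)) k0 <= (2 + orbit w (S k0))/3.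
Proof.
  intros Hw; pose proof (beta_pos w Hw) as Hb.
  assert (Hpl : (2 - orbit w (S k0))/3 <= orbit w k0 <= (2 + orbit w (S k0))/3).
  { assert (Hlap : forall e, e <> Lap1 -> orbit w (S k0) = lap_map e (orbit w k0) ->
                     (2 - orbit w (S k0))/3 <= orbit w k0 <= (2 + orbit w (S k0))/3).
    { intros e He Hs.
      replace (orbit w k0) with (plateau_end e (orbit w (S k0))) by (rewrite Hs; apply plateau_end_lap_map, He).
      apply plateau_end_bounds; lra. }
    destruct (orbit_turn w Hw) as [_ [[_ Hs] | [[_ Hs] | [Hs Hpl]]]];
      [exact (Hlap Lap2 ltac:(easy) Hs) | exact (Hlap Lap3 ltac:(easy) Hs) | rewrite Hs; exact Hpl]. }
  destruct (bone_change_w2 w (orbit w (S k0)) Hw ltac:(lra)) as [Hb' Hz'].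
  - rewrite saw_plateau; [reflexivity | | exact Hpl].
    pose proof (beta_lt_fst w Hw); destruct (bone_in_T w Hw) as (? & ? & ?); unfold inT; cbn [fst snd]; lra.
  - split; [exact Hb' | rewrite Hz'; exact Hpl].
Qed.

Lemma bone_odd_U_of_point w : bone Minus p o w -> exists a1 a2 b,
  odd_U (bone Minus p o) a1 a2 b /\
  exists s, a1 < s < a2 /\ bone Minus p o (s, b) /\ bone Plus p o (s, b).
Proof.
  intros Hw; destruct (bone_plateau_base w Hw) as [Hb Hpl].
  destruct (plateau_bone_odd_U _ _ Hb Hpl) as [a1 [a2 [HU [s (Hs & Hbs & Hz)]]]].
  exists a1, a2, (orbit w (S k0)); split; [exact HU |].
  exists s; split; [exact Hs | split; [exact Hbs | exact (bone_plus_of_orbit _ k0 Hbs Hz)]].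
Qed.

End FixedTurn.

Lemma bone_minus_odd_U p o : (2 <= p)%nat ->
  (forall i, (i < p)%nat -> (o i < p)%nat) ->
  (forall i j, (i < p)%nat -> (j < p)%nat -> o i = o j -> i = j) ->
  (exists w, bone Minus p o w) ->
  exists a1 a2 b, odd_U (bone Minus p o) a1 a2 b /\
    exists s, a1 < s < a2 /\ bone Minus p o (s, b) /\ bone Plus p o (s, b).
Proof.
  intros Hp Hr Hi [w Hw].
  destruct (bone_minus_orbit p o w Hw) as [HT [x [a (Ha & Hxa & Hinc & Hsx & Hrx)]]].
  assert (Hturn : is_turn p o a) by (eapply a_is_turn; eauto).
  assert (Hreach : forall i, (i < p)%nat -> exists k, Nat.iter k o a = i)
    by (intros; eapply a_reaches; eauto).
  destruct (nat_argmin o (S a) p ltac:(destruct Hturn; lia)) as [mu [Hmu Hmin]].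
  destruct (iter_o_inverse p o Hr Hi a Ha Hreach) as [tau Htau].
  destruct (Htau mu ltac:(lia)) as [Hk0 Ek0].
  apply (bone_odd_U_of_point p o a mu (tau mu) Hp Hr Hi Hturn ltac:(lia)
           ltac:(intros i Hi'; apply Hmin; lia) Hreach Ek0 Hk0 w Hw).
Qed.

(** * Plus bones by symmetry *)

(* The reflection [x |-> 1 - x] conjugates [saw w1 w2] to [saw (1 - w2) (1 - w1)] and
   exchanges the critical points [1/3] and [2/3]; on parameters it is [psi]. *)
Definition psi (w : R * R) : R * R := (1 - snd w, 1 - fst w).

Definition reverse_type (p : nat) (o : nat -> nat) (i : nat) : nat := (p - 1 - o (p - 1 - i))%nat.

Lemma psi_involutive w : psi (psi w) = w.
Proof. destruct w; unfold psi; simpl; f_equal; ring. Qed.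

Lemma inT_psi w : inT (psi w) <-> inT w.
Proof. unfold inT, psi; simpl; lra. Qed.

Lemma reverse_type_range p o : (forall i, (i < p)%nat -> (o i < p)%nat) ->
  forall i, (i < p)%nat -> (reverse_type p o i < p)%nat.
Proof. unfold reverse_type; lia. Qed.

Lemma reverse_type_inj p o : (forall i, (i < p)%nat -> (o i < p)%nat) ->
  (forall i j, (i < p)%nat -> (j < p)%nat -> o i = o j -> i = j) ->
  forall i j, (i < p)%nat -> (j < p)%nat -> reverse_type p o i = reverse_type p o j -> i = j.
Proof.
  unfold reverse_type; intros Hr Hi i j Hi' Hj E.
  assert (A := Hr (p - 1 - i)%nat ltac:(lia)); assert (B := Hr (p - 1 - j)%nat ltac:(lia)).
  assert (E' : o (p - 1 - i)%nat = o (p - 1 - j)%nat) by lia.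
  apply Hi in E'; lia.
Qed.

Lemma reverse_type_involutive p o : (forall i, (i < p)%nat -> (o i < p)%nat) ->
  forall i, (i < p)%nat -> reverse_type p (reverse_type p o) i = o i.
Proof.
  unfold reverse_type; intros Hr i Hi.
  replace (p - 1 - (p - 1 - i))%nat with i by lia; specialize (Hr i Hi); lia.
Qed.

Lemma periodic_order_type_reflect p o g g' c :
  (forall i, (i < p)%nat -> (o i < p)%nat) -> (forall y, g' (1 - y) = 1 - g y) ->
  periodic_order_type g c p o -> periodic_order_type g' (1 - c) p (reverse_type p o).
Proof.
  intros Hr Hg [x (Hinc & Hall & Hreach & Hstep)].
  assert (Hiter : forall n, Nat.iter n g' (1 - c) = 1 - Nat.iter n g c).
  { induction n as [|n IH]; simpl; [reflexivity | rewrite IH; apply Hg]. }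
  exists (fun i => 1 - x (p - 1 - i)%nat); split; [| split; [| split]].
  - intros i j Hij Hj; assert (x (p - 1 - j)%nat < x (p - 1 - i)%nat) by (apply Hinc; lia); lra.
  - intros k; destruct (Hall k) as [i [Hi E]]; exists (p - 1 - i)%nat; split; [lia |].
    rewrite Hiter, E; replace (p - 1 - (p - 1 - i))%nat with i by lia; reflexivity.
  - intros i Hi; destruct (Hreach (p - 1 - i)%nat ltac:(lia)) as [k E]; exists k; rewrite Hiter, E; reflexivity.
  - intros i Hi; rewrite Hg, Hstep by lia; unfold reverse_type.
    specialize (Hr (p - 1 - i)%nat ltac:(lia)).
    replace (p - 1 - (p - 1 - o (p - 1 - i)%nat))%nat with (o (p - 1 - i)%nat) by lia; reflexivity.
Qed.

Lemma periodic_order_type_ext p o o' g c : (forall i, (i < p)%nat -> o i = o' i) ->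
  periodic_order_type g c p o -> periodic_order_type g c p o'.
Proof.
  intros E [x (Hinc & Hall & Hreach & Hstep)]; exists x; repeat split; auto.
  intros i Hi; rewrite <- E by exact Hi; apply Hstep, Hi.
Qed.

Lemma saw_psi w y : inT w ->
  saw (fst (psi w)) (snd (psi w)) (1 - y) = 1 - saw (fst w) (snd w) y.
Proof. intros (? & ? & ?); unfold psi; simpl; apply saw_symmetric; lra. Qed.

Lemma bone_plus_iff p o w : (forall i, (i < p)%nat -> (o i < p)%nat) ->
  bone Plus p o w <-> bone Minus p (reverse_type p o) (psi w).
Proof.
  intros Hr; unfold bone; simpl; split.
  - intros [HT H]; split; [apply inT_psi, HT |].
    replace (1/3) with (1 - 2/3) by lra.
    apply (periodic_order_type_reflect p o (saw (fst w) (snd w))); [exact Hr | | exact H].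
    intros y; apply saw_psi, HT.
  - intros [HT H]; apply (proj1 (inT_psi w)) in HT; split; [exact HT |].
    apply (periodic_order_type_ext p (reverse_type p (reverse_type p o)));
      [apply reverse_type_involutive, Hr |].
    replace (2/3) with (1 - 1/3) by lra.
    apply (periodic_order_type_reflect p _ (saw (fst (psi w)) (snd (psi w))));
      [apply reverse_type_range, Hr | | exact H].
    intros y; pose proof (saw_psi (psi w) y) as E; rewrite psi_involutive in E.
    apply E, inT_psi, HT.
Qed.

Lemma seg_vertical x y1 y2 z : y1 <> y2 ->
  seg (x, y1) (x, y2) z <-> fst z = x /\ between y1 y2 (snd z).
Proof.
  intros Hne; rewrite <- param_between by exact Hne; destruct z as [z1 z2]; unfold seg; simpl.
  split.
  - intros [t [Ht E]]; apply pair_equal_spec in E; split; [lra | exists t; split; [exact Ht | lra]].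
  - intros [-> [t [Ht E]]]; exists t; split; [exact Ht | apply pair_equal_spec; split; lra].
Qed.

Lemma seg_horizontal x1 x2 y z : x1 <> x2 ->
  seg (x1, y) (x2, y) z <-> snd z = y /\ between x1 x2 (fst z).
Proof.
  intros Hne; rewrite <- param_between by exact Hne; destruct z as [z1 z2]; unfold seg; simpl.
  split.
  - intros [t [Ht E]]; apply pair_equal_spec in E; split; [lra | exists t; split; [exact Ht | lra]].
  - intros [-> [t [Ht E]]]; exists t; split; [exact Ht | apply pair_equal_spec; split; lra].
Qed.

Lemma open_seg_vertical x y1 y2 z : fst z = x -> strictly_between y1 y2 (snd z) ->
  open_seg (x, y1) (x, y2) z.
Proof.
  intros Hx Hy; destruct (param_strictly_between y1 y2 (snd z) Hy) as [t [Ht E]].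
  exists t; split; [exact Ht |]; destruct z as [z1 z2]; simpl in *; apply pair_equal_spec; split; lra.
Qed.

Lemma open_seg_horizontal x1 x2 y z : snd z = y -> strictly_between x1 x2 (fst z) ->
  open_seg (x1, y) (x2, y) z.
Proof.
  intros Hy Hx; destruct (param_strictly_between x1 x2 (fst z) Hx) as [t [Ht E]].
  exists t; split; [exact Ht |]; destruct z as [z1 z2]; simpl in *; apply pair_equal_spec; split; lra.
Qed.

Definition U_path (a1 a2 b : R) (i : nat) : R * R :=
  match i with 0%nat => (a1, 0) | 1%nat => (a1, b) | 2%nat => (a2, b) | _ => (a2, 0) end.

Lemma U_path_hv a1 a2 b : a1 <> a2 -> 0 < b -> hv_path (U_path a1 a2 b).
Proof.
  intros Ha Hb; split; [| right; unfold vert, horiz; simpl; auto].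
  intros i Hi E; destruct i as [|[|[|]]]; simpl in E; try lia; apply pair_equal_spec in E; lra.
Qed.

Lemma on_U_path a1 a2 b w : a1 <> a2 -> 0 < b ->
  on_path (U_path a1 a2 b) w <-> U_set a1 a2 b w.
Proof.
  intros Ha Hb; unfold on_path, U_set; split.
  - intros [i [Hi Hw]]; destruct i as [|[|[|]]]; simpl in Hw; try lia.
    + apply seg_vertical in Hw; [| lra]; unfold between in Hw; left; split; [left | ]; lra.
    + apply seg_horizontal in Hw; [| exact Ha]; right; exact Hw.
    + apply seg_vertical in Hw; [| lra]; unfold between in Hw; left; split; [right |]; lra.
  - intros [[[Hx | Hx] Hy] | Hw].
    + exists 0%nat; split; [lia |]; simpl; apply seg_vertical; [lra |]; unfold between; lra.
    + exists 2%nat; split; [lia |]; simpl; apply seg_vertical; [lra |]; unfold between; lra.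
    + exists 1%nat; split; [lia |]; simpl; apply seg_horizontal; [exact Ha | exact Hw].
Qed.

Lemma hv_path_psi P : hv_path P -> hv_path (fun i => psi (P i)).
Proof.
  intros [Hne Hhv]; split.
  - intros i Hi E; apply (Hne i Hi).
    rewrite <- (psi_involutive (P i)), <- (psi_involutive (P (S i))), E; reflexivity.
  - unfold horiz, vert, psi in *; simpl.
    destruct Hhv as [(A & B & C) | (A & B & C)]; [right | left]; repeat split; lra.
Qed.

Lemma seg_psi P Q z : seg (psi P) (psi Q) z <-> seg P Q (psi z).
Proof.
  destruct P as [p1 p2], Q as [q1 q2], z as [z1 z2]; unfold seg, psi; simpl.
  split; intros [t [Ht E]]; exists t; split; auto; apply pair_equal_spec in E; apply pair_equal_spec; lra.
Qed.

Lemma bone_shape_psi B P : bone_shape B P -> bone_shape (fun w => B (psi w)) (fun i => psi (P i)).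
Proof.
  intros [Hhv HB]; split; [apply hv_path_psi, Hhv |].
  intros z; rewrite HB; split; intros [i [Hi H]]; exists i; split; auto; apply seg_psi; exact H.
Qed.

(** * Three-segment paths are simple arcs *)

Definition clamp (v : R) : R := (Rabs v - Rabs (v - 1) + 1) / 2.

Lemma clamp_low v : v <= 0 -> clamp v = 0.
Proof. intros; unfold clamp, Rabs; repeat destruct Rcase_abs; lra. Qed.

Lemma clamp_mid v : 0 <= v <= 1 -> clamp v = v.
Proof. intros; unfold clamp, Rabs; repeat destruct Rcase_abs; lra. Qed.

Lemma clamp_high v : 1 <= v -> clamp v = 1.
Proof. intros; unfold clamp, Rabs; repeat destruct Rcase_abs; lra. Qed.

(* [ramp c u] runs from 0 to 1 while [u] runs through the [c]-th third of [0, 1]. *)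
Definition ramp (c u : R) : R := clamp (3 * u - c).

Lemma ramp_continuous c : continuity (ramp c).
Proof.
  assert (Hlin : forall d, continuity (fun u => 3 * u - d)).
  { intros d; apply derivable_continuous; reg. }
  unfold ramp, clamp, Rdiv.
  apply continuity_mult; [| apply continuity_const; intros ? ?; reflexivity].
  apply continuity_plus; [| apply continuity_const; intros ? ?; reflexivity].
  apply continuity_minus; apply (continuity_comp _ Rabs); try apply Rcontinuity_abs.
  - apply Hlin.
  - apply (continuity_minus (fun u => 3 * u - c) (fun _ => 1)); [apply Hlin |].
    apply continuity_const; intros ? ?; reflexivity.
Qed.

Ltac ramp_eval :=
  unfold ramp;
  repeat first [ rewrite (clamp_low (3 * _ - _)) by lra
               | rewrite (clamp_mid (3 * _ - _)) by lra
               | rewrite (clamp_high (3 * _ - _)) by lra ].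

Ltac ramp_thirds u :=
  destruct (Rle_dec (3 * u) 1); [| destruct (Rle_dec (3 * u) 2)]; ramp_eval; try (exfalso; lra).

Lemma ramp_bounds c u : 0 <= ramp c u <= 1.
Proof.
  unfold ramp; destruct (Rle_dec (3 * u - c) 0); [rewrite clamp_low by lra; lra |].
  destruct (Rle_dec (3 * u - c) 1); [rewrite clamp_mid by lra | rewrite clamp_high by lra]; lra.
Qed.

Lemma ramp_sum u : 0 <= u <= 1 -> ramp 0 u + ramp 1 u + ramp 2 u = 3 * u.
Proof. intros; ramp_thirds u; lra. Qed.

Lemma ramp_middle_pos u : 0 < ramp 1 u -> ramp 0 u = 1.
Proof. intros H; revert H; ramp_thirds u; lra. Qed.

Lemma ramp_middle_lt1 u : ramp 1 u < 1 -> ramp 2 u = 0.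
Proof. intros H; revert H; ramp_thirds u; lra. Qed.

Definition path_coord (P : nat -> R * R) (k : R * R -> R) (u : R) : R :=
  k (P 0%nat) + ramp 0 u * (k (P 1%nat) - k (P 0%nat)) + ramp 1 u * (k (P 2%nat) - k (P 1%nat))
  + ramp 2 u * (k (P 3%nat) - k (P 2%nat)).

Lemma path_coord_continuous P k : continuity (path_coord P k).
Proof.
  assert (Hterm : forall c d, continuity (fun u => ramp c u * d)).
  { intros c d; apply continuity_mult; [apply ramp_continuous | apply continuity_const; intros ? ?; reflexivity]. }
  unfold path_coord; repeat apply continuity_plus; try apply Hterm.
  apply continuity_const; intros ? ?; reflexivity.
Qed.

(* Along a path whose first and last segments are parallel and the middle one is
   transversal, the middle ramp and then one of the outer ramps are recovered from the
   position. *)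
Lemma ramps_inj s t D0 D1 D2 : 0 <= s <= 1 -> 0 <= t <= 1 -> D0 <> 0 -> D1 <> 0 -> D2 <> 0 ->
  ramp 0 s * D0 + ramp 2 s * D2 = ramp 0 t * D0 + ramp 2 t * D2 ->
  ramp 1 s * D1 = ramp 1 t * D1 -> s = t.
Proof.
  intros Hs Ht H0 H1 H2 E02 E1.
  apply Rmult_eq_reg_r in E1; [| exact H1].
  pose proof (ramp_bounds 1 s).
  assert (Hsum : ramp 0 s + ramp 1 s + ramp 2 s = ramp 0 t + ramp 1 t + ramp 2 t).
  { destruct (Rlt_dec 0 (ramp 1 s)) as [L | L].
    - rewrite (ramp_middle_pos s), (ramp_middle_pos t) in * by lra.
      apply Rplus_eq_reg_l, Rmult_eq_reg_r in E02; [lra | exact H2].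
    - rewrite (ramp_middle_lt1 s), (ramp_middle_lt1 t) in * by lra.
      rewrite !Rmult_0_l, !Rplus_0_r in E02; apply Rmult_eq_reg_r in E02; [lra | exact H0]. }
  rewrite !ramp_sum in Hsum by assumption; lra.
Qed.

Lemma on_path_param P z :
  on_path P z <-> exists t, 0 <= t <= 1 /\ z = (path_coord P fst t, path_coord P snd t).
Proof.
  destruct z as [z1 z2]; split.
  - intros [i [Hi [tau [Ht E]]]]; apply pair_equal_spec in E; destruct E as [E1 E2].
    assert (Hparam : forall u, 0 <= u <= 1 -> z1 = path_coord P fst u -> z2 = path_coord P snd u ->
                       exists t, 0 <= t <= 1 /\ (z1, z2) = (path_coord P fst t, path_coord P snd t))
      by (intros u Hu H1 H2; exists u; split; [exact Hu | rewrite H1, H2; reflexivity]).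
    unfold path_coord in Hparam; destruct i as [|[|[|i]]]; [| | | lia].
    + apply (Hparam (tau / 3));
        [lra | ramp_eval; rewrite E1; field | ramp_eval; rewrite E2; field].
    + apply (Hparam ((1 + tau) / 3));
        [lra | ramp_eval; rewrite E1; field | ramp_eval; rewrite E2; field].
    + apply (Hparam ((2 + tau) / 3));
        [lra | ramp_eval; rewrite E1; field | ramp_eval; rewrite E2; field].
  - intros [t [Ht E]]; apply pair_equal_spec in E; destruct E as [E1 E2]; unfold path_coord in E1, E2.
    revert E1 E2; ramp_thirds t; intros E1 E2;
      [exists 0%nat; split; [lia |]; exists (3 * t) | exists 1%nat; split; [lia |]; exists (3 * t - 1)
      | exists 2%nat; split; [lia |]; exists (3 * t - 2)];
      (split; [lra | apply pair_equal_spec; split; lra]).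
Qed.

Lemma hv_path_simple_arc P : hv_path P -> simple_arc (on_path P) (P 0%nat) (P 3%nat).
Proof.
  intros [Hne Hhv].
  assert (Hd : forall (k k' : R * R -> R) i, (i < 3)%nat -> k' (P i) = k' (P (S i)) ->
                 (forall u v : R * R, k u = k v -> k' u = k' v -> u = v) ->
                 k (P (S i)) - k (P i) <> 0).
  { intros k k' i Hi E Hkk' D; apply (Hne i Hi), Hkk'; lra. }
  assert (Hfst : forall u v : R * R, fst u = fst v -> snd u = snd v -> u = v)
    by (intros [] [] ? ?; simpl in *; subst; reflexivity).
  assert (Hsnd : forall u v : R * R, snd u = snd v -> fst u = fst v -> u = v)
    by (intros [] [] ? ?; simpl in *; subst; reflexivity).
  exists (path_coord P fst), (path_coord P snd); split; [| split; [| split; [| split]]].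
  - intros t _; split; apply path_coord_continuous.
  - intros s t Hs Ht E; apply pair_equal_spec in E; destruct E as [E1 E2]; unfold path_coord in E1, E2.
    unfold horiz, vert in Hhv; destruct Hhv as [(A & B & C) | (A & B & C)].
    + apply (ramps_inj s t (fst (P 1%nat) - fst (P 0%nat)) (snd (P 2%nat) - snd (P 1%nat))
               (fst (P 3%nat) - fst (P 2%nat))); try assumption;
        [apply (Hd fst snd 0%nat) | apply (Hd snd fst 1%nat) | apply (Hd fst snd 2%nat) | |];
        try (lia || assumption); rewrite ?A, ?B, ?C in *; lra.
    + apply (ramps_inj s t (snd (P 1%nat) - snd (P 0%nat)) (fst (P 2%nat) - fst (P 1%nat))
               (snd (P 3%nat) - snd (P 2%nat))); try assumption;
        [apply (Hd snd fst 0%nat) | apply (Hd fst snd 1%nat) | apply (Hd snd fst 2%nat) | |];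
        try (lia || assumption); rewrite ?A, ?B, ?C in *; lra.
  - intros z; apply on_path_param.
  - unfold path_coord; ramp_eval; destruct (P 0%nat); simpl; f_equal; ring.
  - unfold path_coord; ramp_eval; destruct (P 3%nat); simpl; f_equal; ring.
Qed.

Lemma bone_shape_simple_arc B P : bone_shape B P -> simple_arc B (P 0%nat) (P 3%nat).
Proof.
  intros [Hhv HB]; destruct (hv_path_simple_arc P Hhv) as [g1 [g2 (Hc & Hi & Him & H0 & H3)]].
  exists g1, g2; split; [exact Hc | split; [exact Hi | split; [| split; [exact H0 | exact H3]]]].
  intros z; rewrite HB; apply Him.
Qed.

(** * Intersections of a minus bone with a plus bone *)

Lemma three_way x l h : x <> l -> x <> h -> l < h -> x < l \/ l < x < h \/ h < x.
Proof. intros; destruct (Rlt_dec x l); [| destruct (Rlt_dec x h)]; lra. Qed.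

Section MinusMeetsPlus.
Variables (B1 B2 : R * R -> Prop) (a1 a2 b c1 c2 d : R).
Hypothesis B1_U : forall q, B1 q <-> U_set a1 a2 b q.
Hypothesis B2_U : forall q, B2 q <-> U_set c1 c2 d (psi q).
Hypothesis a_bounds : 0 <= a1 < a2 /\ a2 < 1.
Hypothesis b_bounds : 0 < b < 1.
Hypothesis c_bounds : 0 <= c1 < c2 /\ c2 < 1.
Hypothesis d_bounds : 0 < d < 1.
Hypothesis a1_ne : a1 <> 1 - d.
Hypothesis a2_ne : a2 <> 1 - d.
Hypothesis c1_ne : b <> 1 - c1.
Hypothesis c2_ne : b <> 1 - c2.

Local Notation P := (U_path a1 a2 b).
Local Notation Q := (fun i => psi (U_path c1 c2 d i)).

(* Legs meet legs at [(a_i, 1 - c_j)]; the horizontal edges can only meet at [(1 - d, b)];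
   all other contacts are ruled out by the non-degeneracy hypotheses. *)
Lemma meet_iff q : B1 q /\ B2 q <->
  ((fst q = a1 \/ fst q = a2) /\ (snd q = 1 - c1 \/ snd q = 1 - c2) /\ 1 - d < fst q /\ snd q < b) \/
  (q = (1 - d, b) /\ a1 < 1 - d < a2 /\ 1 - c2 < b < 1 - c1).
Proof.
  rewrite B1_U, B2_U; destruct q as [x y]; unfold U_set, between, psi; simpl.
  rewrite pair_equal_spec; intuition lra.
Qed.

Lemma leg_crossing x y : (x = a1 \/ x = a2) -> (y = 1 - c1 \/ y = 1 - c2) -> 1 - d < x -> y < b ->
  transversal_crossing P Q (x, y).
Proof.
  intros Hx Hy Hdx Hyb.
  assert (HP : exists i, (i = 0 \/ i = 2)%nat /\ open_seg (P i) (P (S i)) (x, y)).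
  { destruct Hx as [-> | ->]; [exists 0%nat | exists 2%nat]; (split; [auto |]); simpl;
      apply open_seg_vertical; unfold strictly_between; simpl; lra. }
  assert (HQ : exists j, (j = 0 \/ j = 2)%nat /\ open_seg (Q j) (Q (S j)) (x, y)).
  { destruct Hy as [-> | ->]; [exists 0%nat | exists 2%nat]; (split; [auto |]); unfold psi; simpl;
      apply open_seg_horizontal; unfold strictly_between; simpl; lra. }
  destruct HP as [i [Hi HPi]], HQ as [j [Hj HQj]].
  exists i, j; split; [lia | split; [lia | split; [exact HPi | split; [exact HQj |]]]].
  unfold horiz, vert, psi; destruct Hi as [-> | ->], Hj as [-> | ->]; simpl; lra.
Qed.

Lemma top_crossing : a1 < 1 - d < a2 -> 1 - c2 < b < 1 - c1 -> transversal_crossing P Q (1 - d, b).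
Proof.
  intros Hd Hb; exists 1%nat, 1%nat; split; [lia | split; [lia | split; [| split]]].
  - apply open_seg_horizontal; unfold strictly_between; simpl; lra.
  - unfold psi; simpl; apply open_seg_vertical; unfold strictly_between; simpl; lra.
  - unfold horiz, vert, psi; simpl; split; intros; reflexivity.
Qed.

Ltac nodup_points :=
  repeat (apply NoDup_cons;
          [simpl; intros Hin;
           repeat (destruct Hin as [Hin | Hin]; [apply pair_equal_spec in Hin; lra |]); exact Hin |]);
  apply NoDup_nil.

Ltac meet_point :=
  first [ left; simpl; split; [first [now left | now right] |
                               split; [first [now left | now right] | lra]]
        | right; split; [reflexivity | lra] ].

Ltac crossing_point :=
  first [ apply leg_crossing; first [now left | now right | lra]
        | apply top_crossing; lra ].

Lemma minus_meets_plus : exists n, (n = 0 \/ n = 2 \/ n = 4)%nat /\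
  meet_transversally_in B1 B2 P Q n /\
  (a1 < 1 - d < a2 -> 1 - c2 < b < 1 - c1 -> n = 2%nat).
Proof.
  destruct (three_way (1 - d) a1 a2) as [D | [D | D]]; try lra;
  destruct (three_way b (1 - c2) (1 - c1)) as [G | [G | G]]; try lra;
  [ exists 0%nat; split; [auto |]; split; [exists nil |]
  | exists 2%nat; split; [auto |]; split; [exists ((a1, 1 - c2) :: (a2, 1 - c2) :: nil) |]
  | exists 4%nat; split; [auto |]; split;
      [exists ((a1, 1 - c1) :: (a1, 1 - c2) :: (a2, 1 - c1) :: (a2, 1 - c2) :: nil) |]
  | exists 0%nat; split; [auto |]; split; [exists nil |]
  | exists 2%nat; split; [auto |]; split; [exists ((a2, 1 - c2) :: (1 - d, b) :: nil) |]
  | exists 2%nat; split; [auto |]; split; [exists ((a2, 1 - c1) :: (a2, 1 - c2) :: nil) |]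
  | exists 0%nat; split; [auto |]; split; [exists nil |]
  | exists 0%nat; split; [auto |]; split; [exists nil |]
  | exists 0%nat; split; [auto |]; split; [exists nil |] ];
  try (intros; first [reflexivity | lra]);
  (split; [nodup_points | split; [reflexivity | split]]).
  all: intros q; first
    [ rewrite meet_iff; split;
      [ intros Hin; repeat (destruct Hin as [<- | Hin]; [meet_point |]); destruct Hin
      | intros [(Hx & Hy & Hdx & Hyb) | (-> & Hd & Hb)];
        [destruct q as [x y]; simpl in *; destruct Hx as [-> | ->], Hy as [-> | ->] |];
        first [solve [simpl; auto 6] | exfalso; lra] ]
    | intros Hin; repeat (destruct Hin as [<- | Hin]; [crossing_point |]); destruct Hin ].
Qed.

End MinusMeetsPlus.

Lemma odd_U_ext B B' a1 a2 b : (forall w, B w <-> B' w) -> odd_U B a1 a2 b -> odd_U B' a1 a2 b.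
Proof.
  intros E (H1 & H2 & H3 & H4 & H5 & H6 & HU); repeat (split; [assumption |]).
  intros w; rewrite <- E; apply HU.
Qed.

Lemma odd_U_shape B a1 a2 b : odd_U B a1 a2 b -> bone_shape B (U_path a1 a2 b).
Proof.
  intros (Ha & _ & Hb & _ & _ & _ & HU); split; [apply U_path_hv; lra |].
  intros z; rewrite HU, on_U_path; [reflexivity | lra | lra].
Qed.

Lemma odd_U_psi_shape B c1 c2 d : odd_U (fun w => B (psi w)) c1 c2 d ->
  bone_shape B (fun i => psi (U_path c1 c2 d i)).
Proof.
  intros HU; destruct (bone_shape_psi _ _ (odd_U_shape _ _ _ _ HU)) as [Hhv HB]; split; [exact Hhv |].
  intros z; rewrite <- HB, psi_involutive; reflexivity.
Qed.

Lemma bone_plus_odd_U p o : (2 <= p)%nat ->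
  (forall i, (i < p)%nat -> (o i < p)%nat) ->
  (forall i j, (i < p)%nat -> (j < p)%nat -> o i = o j -> i = j) ->
  (exists w, bone Plus p o w) ->
  exists c1 c2 d, odd_U (fun w => bone Plus p o (psi w)) c1 c2 d.
Proof.
  intros Hp Hr Hi [w Hw].
  destruct (bone_minus_odd_U p (reverse_type p o) Hp (reverse_type_range p o Hr)
              (reverse_type_inj p o Hr Hi)) as [c1 [c2 [d [HU _]]]].
  - exists (psi w); apply bone_plus_iff; assumption.
  - exists c1, c2, d; apply (odd_U_ext _ _ _ _ _ (fun w => iff_sym (bone_plus_iff p o (psi w) Hr))).
    apply (odd_U_ext (bone Minus p (reverse_type p o))); [| exact HU].
    intros w'; rewrite psi_involutive; reflexivity.
Qed.

(* Corners of different bones are odd triadic, so [a_i <> 1 - d] and [b <> 1 - c_j]. *)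
Lemma odd_Us_meet Bm Bp a1 a2 b c1 c2 d :
  odd_U Bm a1 a2 b -> odd_U (fun w => Bp (psi w)) c1 c2 d ->
  exists n, (n = 0 \/ n = 2 \/ n = 4)%nat /\
    meet_transversally_in Bm Bp (U_path a1 a2 b) (fun i => psi (U_path c1 c2 d i)) n /\
    (a1 < 1 - d < a2 -> 1 - c2 < b < 1 - c1 -> n = 2%nat).
Proof.
  intros (Ha & Ha2 & Hb & Oa1 & Oa2 & Ob & HU) (Hc & Hc2 & Hd & Oc1 & Oc2 & Od & HV).
  apply (minus_meets_plus Bm Bp a1 a2 b c1 c2 d HU); try (split; lra); try lra;
    try (apply odd_triadic_neq_one_minus; assumption).
  intros q; rewrite <- HV, psi_involutive; reflexivity.
Qed.

Lemma bone_simple_arc s p o : (2 <= p)%nat -> is_cyclic_perm p o -> (exists w, bone s p o w) ->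
  exists P : nat -> R * R,
    bone_shape (bone s p o) P /\ simple_arc (bone s p o) (P 0%nat) (P 3%nat) /\
    exists e : edge, on_edge e (P 0%nat) /\ on_edge e (P 3%nat).
Proof.
  intros Hp (Hr & Hi & _) Hne; destruct s.
  - destruct (bone_minus_odd_U p o Hp Hr Hi Hne) as [a1 [a2 [b [HU _]]]].
    pose proof (odd_U_shape _ _ _ _ HU) as Hshape; destruct HU as (Ha & Ha2 & _).
    exists (U_path a1 a2 b); split; [exact Hshape | split; [exact (bone_shape_simple_arc _ _ Hshape) |]].
    exists E_w2_eq_0; simpl; lra.
  - destruct (bone_plus_odd_U p o Hp Hr Hi Hne) as [c1 [c2 [d HU]]].
    pose proof (odd_U_psi_shape _ _ _ _ HU) as Hshape; destruct HU as (Hc & Hc2 & _).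
    exists (fun i => psi (U_path c1 c2 d i)); split; [exact Hshape | split; [exact (bone_shape_simple_arc _ _ Hshape) |]].
    exists E_w1_eq_1; unfold psi; simpl; lra.
Qed.

Lemma bones_meet_0_2_4 p o p' o' :
  (2 <= p)%nat -> is_cyclic_perm p o -> (exists w, bone Minus p o w) ->
  (2 <= p')%nat -> is_cyclic_perm p' o' -> (exists w, bone Plus p' o' w) ->
  exists (P Q : nat -> R * R) (n : nat),
    bone_shape (bone Minus p o) P /\ bone_shape (bone Plus p' o') Q /\
    (n = 0 \/ n = 2 \/ n = 4)%nat /\ meet_transversally_in (bone Minus p o) (bone Plus p' o') P Q n.
Proof.
  intros Hp (Hr & Hi & _) Hne Hp' (Hr' & Hi' & _) Hne'.
  destruct (bone_minus_odd_U p o Hp Hr Hi Hne) as [a1 [a2 [b [HU _]]]].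
  destruct (bone_plus_odd_U p' o' Hp' Hr' Hi' Hne') as [c1 [c2 [d HV]]].
  destruct (odd_Us_meet _ _ _ _ _ _ _ _ HU HV) as [n (Hn & Hmeet & _)].
  exists (U_path a1 a2 b), (fun i => psi (U_path c1 c2 d i)), n.
  split; [apply odd_U_shape, HU | split; [apply odd_U_psi_shape, HV | split; assumption]].
Qed.

(* The minus bone has a point [(s, b)] of its horizontal edge where [2/3] lies on the
   critical orbit; it lies on the vertical edge [w1 = 1 - d] of the dual plus bone. *)
Lemma dual_bones_meet_2 p o : (2 <= p)%nat -> is_cyclic_perm p o ->
  (exists w, bone Minus p o w) -> (exists w, bone Plus p o w) ->
  exists P Q : nat -> R * R,
    bone_shape (bone Minus p o) P /\ bone_shape (bone Plus p o) Q /\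
    meet_transversally_in (bone Minus p o) (bone Plus p o) P Q 2%nat.
Proof.
  intros Hp (Hr & Hi & _) Hne Hne'.
  destruct (bone_minus_odd_U p o Hp Hr Hi Hne) as [a1 [a2 [b [HU [s (Hs & _ & Hplus)]]]]].
  destruct (bone_plus_odd_U p o Hp Hr Hi Hne') as [c1 [c2 [d HV]]].
  destruct (odd_Us_meet _ _ _ _ _ _ _ _ HU HV) as [n (_ & Hmeet & Hdual)].
  exists (U_path a1 a2 b), (fun i => psi (U_path c1 c2 d i)).
  split; [apply odd_U_shape, HU | split; [apply odd_U_psi_shape, HV |]].
  replace 2%nat with n; [exact Hmeet |].
  destruct HU as (_ & _ & _ & _ & _ & Ob & _), HV as (Hc & _ & _ & Oc1 & Oc2 & _ & HV).
  rewrite <- (psi_involutive (s, b)), HV in Hplus; unfold U_set, psi in Hplus; simpl in Hplus.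
  assert (N1 := odd_triadic_neq_one_minus b c1 Ob Oc1).
  assert (N2 := odd_triadic_neq_one_minus b c2 Ob Oc2).
  destruct (Rdichotomy _ _ N1), (Rdichotomy _ _ N2); apply Hdual;
    destruct Hplus as [[[E | E] _] | [Ed Hbet]]; unfold between in *; lra.
Qed.

Theorem lemma3 :
  (* each non-empty bone of period p >= 2 *)
  (forall (s : sign) (p : nat) (o : nat -> nat),
     (2 <= p)%nat -> is_cyclic_perm p o -> (exists w, bone s p o w) ->
     exists P : nat -> R * R,
       bone_shape (bone s p o) P /\
       simple_arc (bone s p o) (P 0%nat) (P 3%nat) /\
       exists e : edge, on_edge e (P 0%nat) /\ on_edge e (P 3%nat)) /\
  (* any pair B_-(o), B_+(o') *)
  (forall (p : nat) (o : nat -> nat) (p' : nat) (o' : nat -> nat),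
     (2 <= p)%nat -> is_cyclic_perm p o -> (exists w, bone Minus p o w) ->
     (2 <= p')%nat -> is_cyclic_perm p' o' -> (exists w, bone Plus p' o' w) ->
     exists (P Q : nat -> R * R) (n : nat),
       bone_shape (bone Minus p o) P /\ bone_shape (bone Plus p' o') Q /\
       (n = 0%nat \/ n = 2%nat \/ n = 4%nat) /\
       meet_transversally_in (bone Minus p o) (bone Plus p' o') P Q n) /\
  (* dual bones *)
  (forall (p : nat) (o : nat -> nat),
     (2 <= p)%nat -> is_cyclic_perm p o ->
     (exists w, bone Minus p o w) -> (exists w, bone Plus p o w) ->
     exists P Q : nat -> R * R,
       bone_shape (bone Minus p o) P /\ bone_shape (bone Plus p o) Q /\
       meet_transversally_in (bone Minus p o) (bone Plus p o) P Q 2%nat).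
Proof.
  split; [exact bone_simple_arc | split; [exact bones_meet_0_2_4 | exact dual_bones_meet_2]].
Qed.
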